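(* Let $\mathbf f=(f_1,\dots,f_n)\in\mathcal{GEN}_n$ and let $R$ be a tournament on $[n+1]$ whose restriction to $[n]$ is $R[\mathbf f]$. For $f_{n+1}\in\mathcal G_0$ write $\mathbf f'=(f_1,\dots,f_n,f_{n+1})$. (a) The set $\{f_{n+1}\in\mathcal G_0:\mathbf f'\in\mathcal{GEN}_{n+1}\}$ is open and dense in $\mathcal G_0$. If $\mathbf f\in\mathcal{GEN}_n^+$, then $\{f_{n+1}\in\mathcal G_0:\mathbf f'\in\mathcal{GEN}_{n+1}^+\}$ is open and dense in $\mathcal G_0$. (b) The set $\{f_{n+1}\in\mathcal G_0:\mathbf f'\in\mathcal{GEN}_{n+1},\ R[\mathbf f']=R\}$ is open and nonempty in $\mathcal G_0$. (c) If $\mathbf f\in\mathcal{GEN}_n^+$, then $\{f_{n+1}\in\mathcal G_0:\mathbf f'\in\mathcal{GEN}_{n+1}^+,\ R[\mathbf f']=R\}$ is open and nonempty in $\mathcal G_0$.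
   Context: Let $\mathcal G$ be the group of strictly increasing continuous maps $f:[-1,1]\to[-1,1]$ with $f(\pm1)=\pm1$, with the sup-norm topology; $i$ is the identity; $\mathcal G_0=\{f\in\mathcal G:\int_{-1}^1 f=0\}$. $f^e(t)=\tfrac12(f(t)+f(-t))$. For $f,g\in\mathcal G$, $Q(f,g)=\int_{-1}^1 f(g^{-1}(t))\,dt$. For $\mathbf f=(f_1,\dots,f_n)\in\mathcal G^n$, $R[\mathbf f]$ is the digraph on $[n]$ with $(i,j)\in R[\mathbf f]$ iff $Q(f_j,f_i)>0$. A tournament on $I$ is a subset of $I\times I$ containing no diagonal pair and exactly one of $(i,j),(j,i)$ for each distinct $i,j$. $\mathcal{GEN}_n$ (generic $n$-tuples) is the set of $\mathbf f\in\mathcal G_0^n$ with $\{i,f_1,\dots,f_n\}$ linearly independent and $Q(f_i,f_j)\neq0$ for all $i\neq j$; $\mathcal{GEN}_n^+$ (strongly generic) is the set of $\mathbf f\in\mathcal G_0^n$ with $\{f_1^e,\dots,f_n^e\}$ linearly independent and $Q(f_i,f_j)\ne0$ for all $i\ne j$. *)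

From Stdlib Require Import Reals Lra ClassicalEpsilon.
From Coquelicot Require Import Coquelicot.
Open Scope R_scope.

(* Elements of G are represented by functions R -> R; only their values on
   [-1,1] matter. *)
Definition in_I (t : R) : Prop := -1 <= t <= 1.

Definition inG (f : R -> R) : Prop :=
  (forall t, in_I t -> in_I (f t)) /\
  (forall s t, in_I s -> in_I t -> s < t -> f s < f t) /\
  (forall x, in_I x -> forall eps, 0 < eps -> exists delta, 0 < delta /\
      forall y, in_I y -> Rabs (y - x) < delta -> Rabs (f y - f x) < eps) /\
  f (-1) = -1 /\ f 1 = 1.

Definition idI : R -> R := fun t => t.

Definition inG0 (f : R -> R) : Prop := inG f /\ RInt f (-1) 1 = 0.

Definition fe (f : R -> R) : R -> R := fun t => (f t + f (- t)) / 2.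

(* inverse on [-1,1] (chosen classically; for g in G it is the true inverse) *)
Definition ginv (g : R -> R) (t : R) : R :=
  epsilon (inhabits 0) (fun s => in_I s /\ g s = t).

Definition Q (f g : R -> R) : R := RInt (fun t => f (ginv g t)) (-1) 1.

(* n-tuples are represented as  f : nat -> (R -> R), indices 0..n-1 *)
Fixpoint lincomb (n : nat) (c : nat -> R) (f : nat -> R -> R) (t : R) : R :=
  match n with
  | O => 0
  | S m => lincomb m c f t + c m * f m t
  end.

Definition lin_indep_with (h : R -> R) (n : nat) (f : nat -> R -> R) : Prop :=
  forall (c0 : R) (c : nat -> R),
    (forall t, in_I t -> c0 * h t + lincomb n c f t = 0) ->
    c0 = 0 /\ forall k, (k < n)%nat -> c k = 0.

Definition lin_indep (n : nat) (f : nat -> R -> R) : Prop :=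
  forall (c : nat -> R),
    (forall t, in_I t -> lincomb n c f t = 0) ->
    forall k, (k < n)%nat -> c k = 0.

Definition all_G0 (n : nat) (f : nat -> R -> R) : Prop :=
  forall k, (k < n)%nat -> inG0 (f k).

Definition Q_nonzero (n : nat) (f : nat -> R -> R) : Prop :=
  forall i j, (i < n)%nat -> (j < n)%nat -> i <> j -> Q (f i) (f j) <> 0.

Definition GEN (n : nat) (f : nat -> R -> R) : Prop :=
  all_G0 n f /\ lin_indep_with idI n f /\ Q_nonzero n f.

Definition GENp (n : nat) (f : nat -> R -> R) : Prop :=
  all_G0 n f /\ lin_indep n (fun k => fe (f k)) /\ Q_nonzero n f.

Definition Rdig (n : nat) (f : nat -> R -> R) (i j : nat) : Prop :=
  (i < n)%nat /\ (j < n)%nat /\ Q (f j) (f i) > 0.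

Definition tournament (m : nat) (Rel : nat -> nat -> Prop) : Prop :=
  (forall i j, Rel i j -> (i < m)%nat /\ (j < m)%nat) /\
  (forall i, ~ Rel i i) /\
  (forall i j, (i < m)%nat -> (j < m)%nat -> i <> j ->
     (Rel i j \/ Rel j i) /\ ~ (Rel i j /\ Rel j i)).

Definition restricts_to (n : nat) (Rel : nat -> nat -> Prop) (f : nat -> R -> R) : Prop :=
  forall i j, (i < n)%nat -> (j < n)%nat -> (Rel i j <-> Rdig n f i j).

Definition same_rel (A B : nat -> nat -> Prop) : Prop := forall i j, A i j <-> B i j.

Definition extend (n : nat) (f : nat -> R -> R) (g : R -> R) : nat -> R -> R :=
  fun k => if Nat.eqb k n then g else f k.

(* sup-norm ball in G: sup_{[-1,1]} |g - f| < e  (sup is attained for continuous maps) *)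
Definition sup_close (f g : R -> R) (e : R) : Prop :=
  forall t, in_I t -> Rabs (g t - f t) < e.

Definition open_in_G0 (S : (R -> R) -> Prop) : Prop :=
  (forall g, S g -> inG0 g) /\
  forall f, S f -> exists e, 0 < e /\ forall g, inG0 g -> sup_close f g e -> S g.

Definition dense_in_G0 (S : (R -> R) -> Prop) : Prop :=
  forall f, inG0 f -> forall e, 0 < e -> exists g, S g /\ sup_close f g e.

Definition nonempty (S : (R -> R) -> Prop) : Prop := exists g, S g.

(* Extending f by g, genericity of the extension amounts to: Q(g, f_j) <> 0 for all j, g outside
   the span V of (f, id), and, for GEN+, the even part of g outside the span of the even parts of
   the f_j.  Each condition is open: Q(., f_j) is 2-Lipschitz in the sup norm, and linear
   independence holds quantitatively (a nonzero combination reaches d * sum |c_k| somewhere), which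
   survives small perturbations.  Each bad set is closed under linear combinations, so it meets a
   segment (1 - s) u + s w at most once unless it contains both ends; moving from any u towards a
   generic w gives density.
   For a prescribed tournament, a piecewise linear g1 with slopes 1 + eps s_k on a fine grid makes
   Q(f_j, g1) affine in s; the cell integrals of (f, id, 1) are independent, so any signs can be
   prescribed.  A steep piecewise linear w lies outside the spans (their members bounded by 1 are
   equicontinuous), and a point of the segment from g1 to w close to g1 is generic with the same
   signs.  The antisymmetry Q(f, g) = - Q(g, f) that turns signs into a tournament is Young's
   equality int F + int F^-1 = 0 for F = f o g^-1. *)

From Stdlib Require Import Reals Lra Lia.
From Stdlib Require Import Classical ClassicalEpsilon FunctionalExtensionality PropExtensionality.
From Coquelicot Require Import Coquelicot.
(* Imported last so that [fe] is the even part of Defs, not the field of Stdlib's [StepFun]. *)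
From Pilot Require Import Defs.
Open Scope R_scope.

(** * Continuity and integrals on [-1, 1] *)

Lemma in_I_opp t : in_I t -> in_I (- t).
Proof. unfold in_I; lra. Qed.

Lemma in_I_m1 : in_I (-1).
Proof. unfold in_I; lra. Qed.

Lemma in_I_1 : in_I 1.
Proof. unfold in_I; lra. Qed.

Lemma Rabs_le_1_of_in_I t : in_I t -> Rabs t <= 1.
Proof. unfold in_I; intros; apply Rabs_le; lra. Qed.

Definition clamp (t : R) : R := Rmax (-1) (Rmin t 1).

Lemma clamp_in_I t : in_I (clamp t).
Proof. unfold clamp, in_I, Rmax, Rmin. repeat destruct Rle_dec; lra. Qed.

Lemma clamp_id t : in_I t -> clamp t = t.
Proof. unfold clamp, in_I, Rmax, Rmin. intros; repeat destruct Rle_dec; lra. Qed.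

Lemma clamp_lipschitz x y : Rabs (clamp x - clamp y) <= Rabs (x - y).
Proof. unfold clamp, Rmax, Rmin. repeat destruct Rle_dec; split_Rabs; lra. Qed.

Definition cont_on_I (h : R -> R) : Prop :=
  forall x, in_I x -> forall eps, 0 < eps -> exists delta, 0 < delta /\
    forall y, in_I y -> Rabs (y - x) < delta -> Rabs (h y - h x) < eps.

Lemma continuous_of_eps_delta (h : R -> R) x :
  (forall eps, 0 < eps -> exists delta, 0 < delta /\
     forall y, Rabs (y - x) < delta -> Rabs (h y - h x) < eps) ->
  continuous h x.
Proof.
  intros H. apply continuity_pt_filterlim.
  intros eps Heps. destruct (H eps Heps) as [d [Hd Hy]].
  exists d; split; auto. intros y [_ Hy']. apply Hy, Hy'.
Qed.

Lemma continuous_of_lipschitz (h : R -> R) L x : 0 <= L ->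
  (forall y z, Rabs (h y - h z) <= L * Rabs (y - z)) -> continuous h x.
Proof.
  intros HL H. apply continuous_of_eps_delta. intros eps Heps.
  exists (eps / (L + 1)). split; [apply Rdiv_lt_0_compat; lra|].
  intros y Hy. eapply Rle_lt_trans; [apply H|].
  apply Rle_lt_trans with (L * (eps / (L + 1))); [apply Rmult_le_compat_l; lra|].
  replace (L * (eps / (L + 1))) with (eps - eps / (L + 1)) by (field; lra).
  assert (0 < eps / (L + 1)) by (apply Rdiv_lt_0_compat; lra). lra.
Qed.

Lemma cont_on_I_iff_clamp h :
  cont_on_I h <-> forall x, continuous (fun t => h (clamp t)) x.
Proof.
  split.
  - intros H x. apply continuous_of_eps_delta. intros eps Heps.
    destruct (H (clamp x) (clamp_in_I x) eps Heps) as [d [Hd Hy]].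
    exists d; split; auto. intros y Hyx. apply Hy; [apply clamp_in_I|].
    eapply Rle_lt_trans; [apply clamp_lipschitz | exact Hyx].
  - intros H x Hx eps Heps.
    destruct (proj1 (filterlim_locally _ _) (H x) (mkposreal eps Heps)) as [d Hd].
    exists d. split; [apply cond_pos|]. intros y Hy Hyx.
    specialize (Hd y Hyx). rewrite !clamp_id in Hd by auto. exact Hd.
Qed.

Lemma cont_on_I_of_continuous h : (forall x, continuous h x) -> cont_on_I h.
Proof.
  intros H. apply cont_on_I_iff_clamp. intros x.
  apply continuous_comp; [|apply H].
  apply continuous_of_lipschitz with 1; [lra|]. intros; rewrite Rmult_1_l; apply clamp_lipschitz.
Qed.

Lemma cont_on_I_comb h1 h2 a b :
  cont_on_I h1 -> cont_on_I h2 -> cont_on_I (fun t => a * h1 t + b * h2 t).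
Proof.
  rewrite !cont_on_I_iff_clamp. intros H1 H2 x.
  apply (continuous_plus (fun t => a * h1 (clamp t)) (fun t => b * h2 (clamp t)));
    [apply (continuous_scal_r a (fun t => h1 (clamp t))) |
     apply (continuous_scal_r b (fun t => h2 (clamp t)))]; auto.
Qed.

Lemma cont_on_I_const c : cont_on_I (fun _ => c).
Proof. apply cont_on_I_of_continuous. intros; apply continuous_const. Qed.

Lemma cont_on_I_id : cont_on_I idI.
Proof. apply cont_on_I_of_continuous. intros; apply continuous_id. Qed.

Lemma cont_on_I_opp h : cont_on_I h -> cont_on_I (fun t => h (- t)).
Proof.
  intros H x Hx eps He. destruct (H (- x) (in_I_opp x Hx) eps He) as [d [Hd P]].
  exists d. split; auto. intros y Hy Hyx. apply P; [apply in_I_opp; auto|].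
  replace (- y - - x) with (- (y - x)) by ring. rewrite Rabs_Ropp. exact Hyx.
Qed.

Lemma cont_on_I_fe h : cont_on_I h -> cont_on_I (fe h).
Proof.
  intros H. replace (fe h) with (fun t => / 2 * h t + / 2 * h (- t))
    by (apply functional_extensionality; intros t; unfold fe; field).
  apply cont_on_I_comb; auto using cont_on_I_opp.
Qed.

Lemma ex_RInt_cont_on_I h a b : cont_on_I h -> in_I a -> in_I b -> ex_RInt h a b.
Proof.
  intros H Ha Hb. apply ex_RInt_ext with (fun t => h (clamp t)).
  - intros x Hx. rewrite clamp_id; auto. unfold in_I in *.
    unfold Rmin, Rmax in Hx; destruct Rle_dec; lra.
  - apply (ex_RInt_continuous (V := R_CompleteNormedModule)).
    intros; apply cont_on_I_iff_clamp; auto.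
Qed.

Lemma cont_on_I_uniform h : cont_on_I h -> forall eps, 0 < eps -> exists delta, 0 < delta /\
  forall x y, in_I x -> in_I y -> Rabs (x - y) < delta -> Rabs (h x - h y) < eps.
Proof.
  intros H eps He.
  destruct (Heine (fun t => h (clamp t)) (fun c => -1 <= c <= 1) (compact_P3 (-1) 1))
    with (eps := mkposreal eps He) as [d Hd].
  { intros x _. apply continuity_pt_filterlim, cont_on_I_iff_clamp, H. }
  exists d. split; [apply cond_pos|]. intros x y Hx Hy Hxy.
  specialize (Hd x y Hx Hy Hxy). rewrite !clamp_id in Hd; auto.
Qed.

(* Coquelicot's integration lemmas specialised to real-valued functions, stated with [0], [+] and [*]
   instead of [zero], [plus] and [scal]. *)
Lemma RInt_const_R a b c : RInt (fun _ => c) a b = (b - a) * c :> R.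
Proof. rewrite RInt_const. reflexivity. Qed.

Lemma RInt_point_R (h : R -> R) a : RInt h a a = 0 :> R.
Proof. exact (RInt_point a h). Qed.

Lemma RInt_Chasles_R (h : R -> R) a b c :
  ex_RInt h a b -> ex_RInt h b c -> RInt h a b + RInt h b c = RInt h a c.
Proof. apply (RInt_Chasles h a b c). Qed.

Lemma RInt_plus_R (h1 h2 : R -> R) a b : ex_RInt h1 a b -> ex_RInt h2 a b ->
  RInt (fun x => h1 x + h2 x) a b = RInt h1 a b + RInt h2 a b :> R.
Proof. apply (RInt_plus (V := R_CompleteNormedModule)). Qed.

Lemma RInt_scal_R (h : R -> R) a b l : ex_RInt h a b -> RInt (fun x => l * h x) a b = l * RInt h a b :> R.
Proof. apply (RInt_scal (V := R_CompleteNormedModule)). Qed.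

Lemma ex_RInt_plus_R (h1 h2 : R -> R) a b :
  ex_RInt h1 a b -> ex_RInt h2 a b -> ex_RInt (fun x => h1 x + h2 x) a b.
Proof. apply (ex_RInt_plus (V := R_NormedModule)). Qed.

Lemma ex_RInt_scal_R (h : R -> R) a b l : ex_RInt h a b -> ex_RInt (fun x => l * h x) a b.
Proof. apply (ex_RInt_scal (V := R_NormedModule)). Qed.

Lemma RInt_bounds (h : R -> R) a b lo hi : a <= b -> ex_RInt h a b ->
  (forall x, a < x < b -> lo <= h x <= hi) -> (b - a) * lo <= RInt h a b <= (b - a) * hi.
Proof.
  intros Hab Ex H. rewrite <- !RInt_const_R.
  split; apply RInt_le; auto; try apply ex_RInt_const; intros x Hx; apply H, Hx.
Qed.

(** * The group G *)

Section Group.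
Variable f : R -> R.
Hypothesis Hf : inG f.

Lemma G_in_I t : in_I t -> in_I (f t).
Proof. destruct Hf as (H & _). apply H. Qed.

Lemma G_lt s t : in_I s -> in_I t -> s < t -> f s < f t.
Proof. destruct Hf as (_ & H & _). apply H. Qed.

Lemma G_cont : cont_on_I f.
Proof. destruct Hf as (_ & _ & H & _). exact H. Qed.

Lemma G_m1 : f (-1) = -1.
Proof. destruct Hf as (_ & _ & _ & H & _). exact H. Qed.

Lemma G_1 : f 1 = 1.
Proof. destruct Hf as (_ & _ & _ & _ & H). exact H. Qed.

Lemma G_le s t : in_I s -> in_I t -> s <= t -> f s <= f t.
Proof. intros Hs Ht [H|H]; [left; apply G_lt | right; subst]; auto. Qed.

Lemma G_lt_rev s t : in_I s -> in_I t -> f s < f t -> s < t.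
Proof. intros Hs Ht E. destruct (Rlt_le_dec s t) as [|H]; auto. apply G_le in H; auto; lra. Qed.

Lemma G_inj s t : in_I s -> in_I t -> f s = f t -> s = t.
Proof.
  intros Hs Ht E. destruct (Rtotal_order s t) as [H|[H|H]]; auto;
    apply G_lt in H; auto; lra.
Qed.

Lemma G_bound t : in_I t -> Rabs (f t) <= 1.
Proof. intros; apply Rabs_le_1_of_in_I, G_in_I; auto. Qed.

Lemma G_surj t : in_I t -> exists s, in_I s /\ f s = t.
Proof.
  intros Ht.
  assert (C : continuity (fun x => f (clamp x) - t)).
  { intro x. apply continuity_pt_minus; [|apply continuity_pt_const; intros ? ?; reflexivity].
    apply continuity_pt_filterlim, cont_on_I_iff_clamp, G_cont. }
  destruct (IVT_cor _ (-1) 1 C) as [z [Hz Ez]]; [lra| |].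
  - rewrite (clamp_id (-1) in_I_m1), (clamp_id 1 in_I_1), G_m1, G_1.
    unfold in_I in Ht. nra.
  - exists z. rewrite clamp_id in Ez by (unfold in_I; lra). split; [unfold in_I|]; lra.
Qed.

Lemma ginv_spec t : in_I t -> in_I (ginv f t) /\ f (ginv f t) = t.
Proof. intros Ht. unfold ginv. apply epsilon_spec, G_surj, Ht. Qed.

Lemma ginv_in_I t : in_I t -> in_I (ginv f t).
Proof. apply ginv_spec. Qed.

Lemma f_ginv t : in_I t -> f (ginv f t) = t.
Proof. apply ginv_spec. Qed.

Lemma ginv_f s : in_I s -> ginv f (f s) = s.
Proof.
  intros Hs. apply G_inj; [apply ginv_in_I, G_in_I | | rewrite f_ginv; [|apply G_in_I]]; auto.
Qed.

Lemma ginv_cont : cont_on_I (ginv f).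
Proof.
  intros y0 Hy0 eps He. set (x0 := ginv f y0).
  assert (Hx0 : in_I x0) by (apply ginv_in_I; auto).
  set (a := Rmax (-1) (x0 - eps / 2)). set (b := Rmin 1 (x0 + eps / 2)).
  assert (Ha : in_I a /\ a <= x0) by (unfold a, in_I, Rmax in *; destruct Rle_dec; lra).
  assert (Hb : in_I b /\ x0 <= b) by (unfold b, in_I, Rmin in *; destruct Rle_dec; lra).
  set (dl := if Rlt_dec a x0 then f x0 - f a else 1).
  set (du := if Rlt_dec x0 b then f b - f x0 else 1).
  assert (Hdl : 0 < dl).
  { unfold dl; destruct (Rlt_dec a x0); [pose proof (G_lt a x0 (proj1 Ha) Hx0 r)|]; lra. }
  assert (Hdu : 0 < du).
  { unfold du; destruct (Rlt_dec x0 b); [pose proof (G_lt x0 b Hx0 (proj1 Hb) r)|]; lra. }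
  exists (Rmin dl du). split; [apply Rmin_pos; auto|].
  intros y Hy Hyy. apply Rabs_def2 in Hyy.
  pose proof (Rmin_l dl du). pose proof (Rmin_r dl du).
  assert (Hz : in_I (ginv f y)) by (apply ginv_in_I; auto).
  assert (Ez : f (ginv f y) = y) by (apply f_ginv; auto).
  assert (Ey0 : f x0 = y0) by (apply f_ginv; auto).
  apply Rabs_def1.
  - destruct (Rlt_dec (ginv f y - x0) eps) as [|L]; auto. exfalso.
    assert (Eb : b = x0 + eps / 2) by (unfold b, Rmin; destruct Rle_dec; unfold in_I in Hz; lra).
    assert (du = f b - f x0) by (unfold du; destruct (Rlt_dec x0 b); lra).
    assert (f b <= f (ginv f y)) by (apply G_le; try apply Hb; auto; lra).
    lra.
  - destruct (Rlt_dec (- eps) (ginv f y - x0)) as [|L]; auto. exfalso.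
    assert (Ea : a = x0 - eps / 2) by (unfold a, Rmax; destruct Rle_dec; unfold in_I in Hz; lra).
    assert (dl = f x0 - f a) by (unfold dl; destruct (Rlt_dec a x0); lra).
    assert (f (ginv f y) <= f a) by (apply G_le; try apply Ha; auto; lra).
    lra.
Qed.

Lemma ginv_G : inG (ginv f).
Proof.
  split; [|split; [|split; [|split]]].
  - apply ginv_in_I.
  - intros s t Hs Ht Hst. apply G_lt_rev; try apply ginv_in_I; auto. rewrite !f_ginv; auto.
  - apply ginv_cont.
  - rewrite <- G_m1 at 1. apply ginv_f, in_I_m1.
  - rewrite <- G_1 at 1. apply ginv_f, in_I_1.
Qed.

End Group.

Lemma G_comp u v : inG u -> inG v -> inG (fun t => u (v t)).
Proof.
  intros Hu Hv. split; [|split; [|split; [|split]]].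
  - intros; apply (G_in_I u), (G_in_I v); auto.
  - intros; apply (G_lt u); try apply (G_in_I v); auto; apply (G_lt v); auto.
  - intros x Hx eps He.
    destruct (G_cont u Hu (v x) (G_in_I v Hv x Hx) eps He) as [d1 [Hd1 P1]].
    destruct (G_cont v Hv x Hx d1 Hd1) as [d2 [Hd2 P2]].
    exists d2; split; auto. intros y Hy Hyx. apply P1; [apply (G_in_I v)|apply P2]; auto.
  - rewrite (G_m1 v), (G_m1 u); auto.
  - rewrite (G_1 v), (G_1 u); auto.
Qed.

Lemma G_comb u w s : inG u -> inG w -> 0 <= s <= 1 -> inG (fun t => (1 - s) * u t + s * w t).
Proof.
  intros Hu Hw Hs. split; [|split; [|split; [|split]]].
  - intros t Ht. pose proof (G_in_I u Hu t Ht). pose proof (G_in_I w Hw t Ht).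
    unfold in_I in *. nra.
  - intros a b Ha Hb Hab.
    pose proof (G_lt u Hu a b Ha Hb Hab). pose proof (G_lt w Hw a b Ha Hb Hab).
    destruct (Rle_dec (u b - u a) (w b - w a)).
    + assert (0 <= s * ((w b - w a) - (u b - u a))) by (apply Rmult_le_pos; lra). nra.
    + assert (0 <= (1 - s) * ((u b - u a) - (w b - w a))) by (apply Rmult_le_pos; lra). nra.
  - apply cont_on_I_comb; apply G_cont; auto.
  - rewrite (G_m1 u), (G_m1 w); auto; ring.
  - rewrite (G_1 u), (G_1 w); auto; ring.
Qed.

Lemma RInt_comb_G0 u w a b : inG0 u -> inG0 w -> RInt (fun t => a * u t + b * w t) (-1) 1 = 0 :> R.
Proof.
  intros [Hu Iu] [Hw Iw].
  assert (Eu := ex_RInt_cont_on_I u _ _ (G_cont u Hu) in_I_m1 in_I_1).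
  assert (Ew := ex_RInt_cont_on_I w _ _ (G_cont w Hw) in_I_m1 in_I_1).
  rewrite (RInt_plus_R (fun t => a * u t) (fun t => b * w t)) by (apply ex_RInt_scal_R; auto).
  rewrite (RInt_scal_R u), (RInt_scal_R w) by auto.
  change (RInt u (-1) 1 = 0 :> R) in Iu. change (RInt w (-1) 1 = 0 :> R) in Iw.
  rewrite Iu, Iw. ring.
Qed.

(** * Young's identity and the antisymmetry of Q *)

Definition grid (N k : nat) : R := -1 + 2 * INR k / INR N.

Section Grid.
Variable N : nat.
Hypothesis HN : (0 < N)%nat.

Lemma INR_N_pos : 0 < INR N.
Proof. apply lt_0_INR, HN. Qed.

Lemma grid_0 : grid N 0 = -1.
Proof. pose proof INR_N_pos. unfold grid. simpl. field. lra. Qed.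

Lemma grid_N : grid N N = 1.
Proof. pose proof INR_N_pos. unfold grid. field. lra. Qed.

Lemma grid_step k : grid N (S k) - grid N k = 2 / INR N.
Proof. pose proof INR_N_pos. unfold grid. rewrite S_INR. field. lra. Qed.

Lemma grid_lt k : grid N k < grid N (S k).
Proof.
  pose proof INR_N_pos. pose proof (grid_step k).
  assert (0 < 2 / INR N) by (apply Rdiv_lt_0_compat; lra). lra.
Qed.

Lemma grid_in_I k : (k <= N)%nat -> in_I (grid N k).
Proof.
  intros Hk. apply le_INR in Hk. pose proof (pos_INR k). pose proof INR_N_pos. unfold grid, in_I.
  assert (0 <= 2 * INR k / INR N) by (apply Rdiv_le_0_compat; lra).
  assert (2 * INR k / INR N <= 2).
  { apply (Rmult_le_reg_r (INR N)); auto. unfold Rdiv. rewrite Rmult_assoc, Rinv_l; lra. }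
  lra.
Qed.

Lemma grid_cell t : in_I t -> exists k, (k < N)%nat /\ grid N k <= t <= grid N (S k).
Proof.
  intros Ht.
  assert (G : forall M, (0 < M <= N)%nat -> t <= grid N M ->
            exists k, (k < M)%nat /\ grid N k <= t <= grid N (S k)).
  { induction M as [|M IH]; intros HM Ht'; [lia|].
    destruct (Rle_dec t (grid N M)) as [Hle|Hgt].
    - destruct (Nat.eq_dec M 0) as [->|HM0].
      + exists 0%nat. rewrite grid_0 in *. unfold in_I in Ht. split; [lia|lra].
      + destruct (IH ltac:(lia) Hle) as [k [Hk Hk']]. exists k; split; auto; lia.
    - exists M. split; [lia|lra]. }
  apply G; [lia|]. rewrite grid_N. apply Ht.
Qed.

Lemma grid_increment_bound (Psi F : R -> R) :
  (forall t t', -1 <= t -> t <= t' -> t' <= 1 -> Rabs (Psi t' - Psi t) <= (t' - t) * (F t' - F t)) ->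
  Rabs (Psi 1 - Psi (-1)) <= 2 / INR N * (F 1 - F (-1)).
Proof.
  intros HP.
  assert (Hc : forall M, (M <= N)%nat ->
            Rabs (Psi (grid N M) - Psi (grid N 0)) <= 2 / INR N * (F (grid N M) - F (grid N 0))).
  { induction M as [|M IH]; intros HM.
    - rewrite !Rminus_diag, Rabs_R0. lra.
    - specialize (IH ltac:(lia)).
      pose proof (grid_in_I M ltac:(lia)) as [H1 H2]. pose proof (grid_in_I (S M) HM) as [H3 H4].
      pose proof (grid_lt M) as H5.
      assert (A := HP (grid N M) (grid N (S M)) H1 (Rlt_le _ _ H5) H4). rewrite grid_step in A.
      replace (Psi (grid N (S M)) - Psi (grid N 0))
        with ((Psi (grid N (S M)) - Psi (grid N M)) + (Psi (grid N M) - Psi (grid N 0))) by ring.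
      eapply Rle_trans; [apply Rabs_triang|]. lra. }
  specialize (Hc N (le_n N)). rewrite grid_N, grid_0 in Hc. exact Hc.
Qed.

End Grid.

Lemma eq_of_increment_bound (Psi F : R -> R) :
  (forall t t', -1 <= t -> t <= t' -> t' <= 1 -> Rabs (Psi t' - Psi t) <= (t' - t) * (F t' - F t)) ->
  Psi 1 = Psi (-1).
Proof.
  intros HP.
  set (D := F 1 - F (-1)).
  assert (HD : 0 <= D).
  { specialize (HP (-1) 1 ltac:(lra) ltac:(lra) ltac:(lra)). unfold D.
    replace (1 - -1) with 2 in HP by ring. pose proof (Rabs_pos (Psi 1 - Psi (-1))). lra. }
  destruct (Req_dec (Psi 1) (Psi (-1))) as [|E]; auto. exfalso.
  set (e := Rabs (Psi 1 - Psi (-1))). assert (He : 0 < e) by (apply Rabs_pos_lt; lra).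
  assert (Hq : 0 < e / (2 * D + 1)) by (apply Rdiv_lt_0_compat; lra).
  destruct (archimed_cor1 _ Hq) as [N [HN1 HN2]].
  assert (Hb := grid_increment_bound N HN2 Psi F HP). fold e D in Hb.
  assert (2 * D * / INR N <= 2 * D * (e / (2 * D + 1))) by (apply Rmult_le_compat_l; lra).
  assert (2 * D * (e / (2 * D + 1)) = e - e / (2 * D + 1)) by (field; lra).
  unfold Rdiv in Hb. lra.
Qed.

(* Young's equality: [young_defect F] vanishes at -1 and has second-order increments, so it
   also vanishes at 1, where it equals int F + int F^-1. *)
Definition young_defect (F : R -> R) (t : R) : R :=
  RInt F (-1) t + RInt (ginv F) (-1) (F t) - t * F t + 1.

Lemma young_defect_increment F t t' : inG F -> -1 <= t -> t <= t' -> t' <= 1 ->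
  Rabs (young_defect F t' - young_defect F t) <= (t' - t) * (F t' - F t).
Proof.
  intros HF H1 H2 H3.
  assert (It : in_I t) by (unfold in_I; lra). assert (It' : in_I t') by (unfold in_I; lra).
  pose proof (G_in_I F HF t It) as IFt. pose proof (G_in_I F HF t' It') as IFt'.
  assert (HF' := ginv_G F HF).
  assert (ExF : forall a b, in_I a -> in_I b -> ex_RInt F a b)
    by (intros; apply ex_RInt_cont_on_I; auto; apply G_cont; auto).
  assert (ExG : forall a b, in_I a -> in_I b -> ex_RInt (ginv F) a b)
    by (intros; apply ex_RInt_cont_on_I; auto; apply G_cont; auto).
  unfold young_defect.
  rewrite <- (RInt_Chasles_R F (-1) t t') by auto using in_I_m1.
  rewrite <- (RInt_Chasles_R (ginv F) (-1) (F t) (F t')) by auto using in_I_m1.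
  assert (B1 : (t' - t) * F t <= RInt F t t' <= (t' - t) * F t').
  { apply RInt_bounds; auto. intros x Hx. split; apply (G_le F HF); unfold in_I in *; lra. }
  assert (B2 : (F t' - F t) * t <= RInt (ginv F) (F t) (F t') <= (F t' - F t) * t').
  { apply RInt_bounds; auto. apply (G_le F HF); auto.
    intros x Hx. rewrite <- (ginv_f F HF t It) at 1. rewrite <- (ginv_f F HF t' It').
    split; apply (G_le _ HF'); unfold in_I in *; lra. }
  apply Rabs_le. split; lra.
Qed.

Lemma RInt_add_RInt_ginv F : inG F -> RInt F (-1) 1 + RInt (ginv F) (-1) 1 = 0.
Proof.
  intros HF.
  assert (E1 : young_defect F 1 = RInt F (-1) 1 + RInt (ginv F) (-1) 1)
    by (unfold young_defect; rewrite (G_1 F HF); ring).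
  assert (E0 : young_defect F (-1) = 0)
    by (unfold young_defect; rewrite (G_m1 F HF), !RInt_point_R; ring).
  rewrite <- E1, <- E0. apply eq_of_increment_bound with F.
  intros; apply young_defect_increment; auto.
Qed.

Lemma Q_antisym f g : inG f -> inG g -> Q f g + Q g f = 0.
Proof.
  intros Hf Hg. set (F := fun t => f (ginv g t)).
  assert (HF : inG F) by (apply (G_comp f (ginv g)); [|apply ginv_G]; auto).
  assert (E : Q g f = RInt (ginv F) (-1) 1).
  { unfold Q. apply RInt_ext. intros x Hx. rewrite Rmin_left, Rmax_right in Hx by lra.
    assert (Ix : in_I x) by (unfold in_I; lra).
    assert (Ig : in_I (g (ginv f x))) by (apply (G_in_I g), ginv_in_I; auto).
    apply (G_inj F HF); [apply Ig | apply ginv_in_I; auto |].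
    rewrite (f_ginv F HF) by auto. unfold F.
    rewrite (ginv_f g Hg) by (apply ginv_in_I; auto). apply f_ginv; auto. }
  rewrite E. apply RInt_add_RInt_ginv, HF.
Qed.

Lemma Q_self g : inG g -> Q g g = 0.
Proof. intros Hg. pose proof (Q_antisym g g Hg Hg). lra. Qed.

Lemma Q_swap f g : inG f -> inG g -> Q g f = - Q f g.
Proof. intros Hf Hg. pose proof (Q_antisym f g Hf Hg). lra. Qed.

Lemma ex_RInt_comp_ginv u f a b : cont_on_I u -> inG f -> in_I a -> in_I b ->
  ex_RInt (fun t => u (ginv f t)) a b.
Proof.
  intros Hu Hf Ha Hb. apply ex_RInt_cont_on_I; auto.
  intros x Hx eps He.
  destruct (Hu (ginv f x) (ginv_in_I f Hf x Hx) eps He) as [d1 [Hd1 P1]].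
  destruct (G_cont _ (ginv_G f Hf) x Hx d1 Hd1) as [d2 [Hd2 P2]].
  exists d2; split; auto. intros y Hy Hyx. apply P1; [apply ginv_in_I | apply P2]; auto.
Qed.

Lemma Q_comb u w a b f : cont_on_I u -> cont_on_I w -> inG f ->
  Q (fun t => a * u t + b * w t) f = a * Q u f + b * Q w f.
Proof.
  intros Hu Hw Hf. unfold Q.
  pose proof (ex_RInt_comp_ginv u f _ _ Hu Hf in_I_m1 in_I_1) as Eu.
  pose proof (ex_RInt_comp_ginv w f _ _ Hw Hf in_I_m1 in_I_1) as Ew.
  rewrite (RInt_plus_R (fun t => a * u (ginv f t)) (fun t => b * w (ginv f t)))
    by (apply ex_RInt_scal_R; auto).
  rewrite (RInt_scal_R (fun t => u (ginv f t))), (RInt_scal_R (fun t => w (ginv f t))); auto.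
Qed.

Lemma Q_dist u w f e : cont_on_I u -> cont_on_I w -> inG f ->
  (forall t, in_I t -> Rabs (u t - w t) <= e) -> Rabs (Q u f - Q w f) <= 2 * e.
Proof.
  intros Hu Hw Hf He.
  replace (Q u f - Q w f) with (Q (fun t => 1 * u t + (-1) * w t) f) by (rewrite Q_comb; auto; ring).
  replace (2 * e) with ((1 - -1) * e) by ring.
  unfold Q. apply abs_RInt_le_const; [lra| |].
  - apply (ex_RInt_comp_ginv (fun t => 1 * u t + -1 * w t));
      [apply cont_on_I_comb; auto | auto | apply in_I_m1 | apply in_I_1].
  - intros t Ht. replace (1 * u (ginv f t) + -1 * w (ginv f t)) with (u (ginv f t) - w (ginv f t)) by ring.
    apply He, ginv_in_I; [auto | unfold in_I; lra].
Qed.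

(** * Finite linear combinations *)

Fixpoint sum_lt (M : nat) (g : nat -> R) : R :=
  match M with O => 0 | S M' => sum_lt M' g + g M' end.

Lemma sum_lt_ext M g g' : (forall k, (k < M)%nat -> g k = g' k) -> sum_lt M g = sum_lt M g'.
Proof. induction M; simpl; intros H; auto. rewrite IHM, H; auto. Qed.

Lemma sum_lt_comb M g h a b :
  sum_lt M (fun k => a * g k + b * h k) = a * sum_lt M g + b * sum_lt M h.
Proof. induction M; simpl; [|rewrite IHM]; ring. Qed.

Lemma sum_lt_plus M g h : sum_lt M (fun k => g k + h k) = sum_lt M g + sum_lt M h.
Proof. induction M; simpl; [|rewrite IHM]; ring. Qed.

Lemma sum_lt_minus M g h : sum_lt M (fun k => g k - h k) = sum_lt M g - sum_lt M h.
Proof. induction M; simpl; [|rewrite IHM]; ring. Qed.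

Lemma sum_lt_mult_r M g a : sum_lt M (fun k => g k * a) = sum_lt M g * a.
Proof. induction M; simpl; [|rewrite IHM]; ring. Qed.

Lemma sum_lt_zero M g : (forall k, (k < M)%nat -> g k = 0) -> sum_lt M g = 0.
Proof. induction M; simpl; intros H; auto. rewrite IHM, H; auto; ring. Qed.

Lemma sum_lt_le M g h : (forall k, (k < M)%nat -> g k <= h k) -> sum_lt M g <= sum_lt M h.
Proof.
  induction M; simpl; intros H; [lra|].
  assert (g M <= h M) by (apply H; lia). assert (sum_lt M g <= sum_lt M h) by (apply IHM; auto).
  lra.
Qed.

Lemma sum_lt_abs M g : Rabs (sum_lt M g) <= sum_lt M (fun k => Rabs (g k)).
Proof.
  induction M; simpl; [rewrite Rabs_R0; lra|].
  eapply Rle_trans; [apply Rabs_triang|]. lra.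
Qed.

Lemma sum_lt_single M k v : (k < M)%nat -> sum_lt M (fun l => if Nat.eqb l k then v else 0) = v.
Proof.
  intros Hk. induction M as [|M IH]; [lia|]. simpl.
  destruct (Nat.eqb_spec M k) as [->|Hne].
  - rewrite sum_lt_zero; [ring|]. intros l Hl. destruct (Nat.eqb_spec l k); [lia|auto].
  - rewrite IH by lia. ring.
Qed.

Section LinearCombinations.
Context {X : Type}.

Definition lc (m : nat) (c : nat -> R) (phi : nat -> X -> R) (x : X) : R :=
  sum_lt m (fun k => c k * phi k x).

Definition l1norm (m : nat) (c : nat -> R) : R := sum_lt m (fun k => Rabs (c k)).

Definition indep (D : X -> Prop) (m : nat) (phi : nat -> X -> R) : Prop :=
  forall c, (forall x, D x -> lc m c phi x = 0) -> forall k, (k < m)%nat -> c k = 0.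

Lemma lc_S m c phi x : lc (S m) c phi x = lc m c phi x + c m * phi m x.
Proof. reflexivity. Qed.

Lemma lc_ext m c c' phi phi' x x' : (forall k, (k < m)%nat -> c k = c' k) ->
  (forall k, (k < m)%nat -> phi k x = phi' k x') -> lc m c phi x = lc m c' phi' x'.
Proof. intros Hc Hphi. apply sum_lt_ext. intros k Hk. rewrite Hc, Hphi; auto. Qed.

Lemma lc_update m c v phi x : lc m (fun k => if Nat.eqb k m then v else c k) phi x = lc m c phi x.
Proof. apply lc_ext; auto. intros k Hk. destruct (Nat.eqb_spec k m); [lia|reflexivity]. Qed.

Lemma lc_comb_coef m c1 c2 phi a b x :
  lc m (fun k => a * c1 k + b * c2 k) phi x = a * lc m c1 phi x + b * lc m c2 phi x.
Proof. unfold lc. rewrite <- sum_lt_comb. apply sum_lt_ext. intros; ring. Qed.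

Lemma lc_zero_fun m c phi x : (forall k, (k < m)%nat -> phi k x = 0) -> lc m c phi x = 0.
Proof.
  intros H. apply sum_lt_zero. intros k Hk. rewrite H; auto; ring.
Qed.

Lemma lc_zero_coef m c phi x : (forall k, (k < m)%nat -> c k = 0) -> lc m c phi x = 0.
Proof. intros H. apply sum_lt_zero. intros k Hk. rewrite H; auto; ring. Qed.

Lemma l1norm_nonneg m c : 0 <= l1norm m c.
Proof.
  unfold l1norm. rewrite <- (sum_lt_zero m (fun _ => 0)) by auto.
  apply sum_lt_le. intros; apply Rabs_pos.
Qed.

Lemma l1norm_S m c : l1norm (S m) c = l1norm m c + Rabs (c m).
Proof. reflexivity. Qed.

Lemma Rabs_le_l1norm m c k : (k < m)%nat -> Rabs (c k) <= l1norm m c.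
Proof.
  induction m; intros Hk; [lia|]. rewrite l1norm_S.
  pose proof (l1norm_nonneg m c). pose proof (Rabs_pos (c m)).
  destruct (Nat.eq_dec k m) as [->|]; [lra|]. specialize (IHm ltac:(lia)). lra.
Qed.

Lemma l1norm_eq0 m c : l1norm m c = 0 -> forall k, (k < m)%nat -> c k = 0.
Proof.
  intros H k Hk. pose proof (Rabs_le_l1norm m c k Hk).
  destruct (Req_dec (c k) 0) as [|Hne]; auto. pose proof (Rabs_pos_lt _ Hne). lra.
Qed.

Lemma lc_dist m c (phi psi : nat -> X -> R) x y B :
  (forall k, (k < m)%nat -> Rabs (phi k x - psi k y) <= B) ->
  Rabs (lc m c phi x - lc m c psi y) <= l1norm m c * B.
Proof.
  intros H. unfold lc, l1norm. rewrite <- sum_lt_minus.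
  eapply Rle_trans; [apply sum_lt_abs|].
  rewrite <- sum_lt_mult_r. apply sum_lt_le. intros k Hk.
  replace (c k * phi k x - c k * psi k y) with (c k * (phi k x - psi k y)) by ring.
  rewrite Rabs_mult. apply Rle_trans with (Rabs (c k) * B); [|lra].
  apply Rmult_le_compat_l; [apply Rabs_pos | apply H; auto].
Qed.

Lemma lc_bound m c (phi : nat -> X -> R) x K :
  (forall k, (k < m)%nat -> Rabs (phi k x) <= K) -> Rabs (lc m c phi x) <= l1norm m c * K.
Proof.
  intros H. rewrite <- (Rminus_0_r (lc m c phi x)), <- (lc_zero_fun m c (fun _ _ => 0) x) by auto.
  apply lc_dist. intros; rewrite Rminus_0_r; auto.
Qed.

End LinearCombinations.

Lemma lower_bound_combine d' K r L S' y p q : 0 < K -> 0 < r -> 0 <= L -> 0 < d' -> 0 <= S' -> 0 <= y ->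
  d' * S' - K * y <= p -> r * y <= q ->
  Rmin (r * d' / (2 * (K + r) * (1 + L))) (r / 2) * (S' * (1 + L) + y) <= Rmax p q.
Proof.
  intros HK Hr HL Hd HS Hy Hp Hq.
  pose proof (Rmax_l p q) as Hpm. pose proof (Rmax_r p q) as Hqm.
  assert (Hmax : r * (d' * S') / (K + r) <= Rmax p q).
  { destruct (Rle_dec (r * (d' * S') / (K + r)) q) as [|Hlt]; [lra|].
    assert (Hy' : y < d' * S' / (K + r)).
    { apply (Rmult_lt_reg_l r); auto.
      replace (r * (d' * S' / (K + r))) with (r * (d' * S') / (K + r)) by (field; lra). lra. }
    assert (K * y <= K * (d' * S' / (K + r))) by (apply Rmult_le_compat_l; lra).
    replace (r * (d' * S') / (K + r)) with (d' * S' - K * (d' * S' / (K + r))) by (field; lra). lra. }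
  set (d1 := r * d' / (2 * (K + r) * (1 + L))).
  assert (Hd1 : 0 <= d1) by (apply Rdiv_le_0_compat; nra).
  pose proof (Rmin_l d1 (r / 2)). pose proof (Rmin_r d1 (r / 2)).
  assert (0 <= Rmin d1 (r / 2)) by (apply Rmin_glb; lra).
  apply Rle_trans with (d1 * (S' * (1 + L)) + r / 2 * y).
  { rewrite Rmult_plus_distr_l. apply Rplus_le_compat; apply Rmult_le_compat_r; nra. }
  replace (d1 * (S' * (1 + L))) with (r * (d' * S') / (K + r) / 2) by (unfold d1; field; lra).
  lra.
Qed.

Section Elimination.
Context {X : Type}.

Definition eliminate (m : nat) (phi : nat -> X -> R) (x0 : X) : nat -> X -> R :=
  fun k x => phi k x - phi k x0 / phi m x0 * phi m x.

Lemma lc_eliminate m c phi x0 x :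
  lc (S m) c phi x = lc m c (eliminate m phi x0) x + (c m + lc m c phi x0 / phi m x0) * phi m x.
Proof.
  rewrite lc_S. unfold lc, eliminate.
  rewrite (sum_lt_ext m (fun k => c k * (phi k x - phi k x0 / phi m x0 * phi m x))
    (fun k => c k * phi k x - c k * phi k x0 * (/ phi m x0 * phi m x))) by (intros; unfold Rdiv; ring).
  rewrite sum_lt_minus, sum_lt_mult_r. unfold Rdiv. ring.
Qed.

Lemma eliminate_at m phi x0 k : phi m x0 <> 0 -> eliminate m phi x0 k x0 = 0.
Proof. intros H. unfold eliminate. field. auto. Qed.

Lemma indep_eliminate (D : X -> Prop) m phi x0 : indep D (S m) phi -> phi m x0 <> 0 ->
  indep D m (eliminate m phi x0).
Proof.
  intros Hi Hr c Hc k Hk.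
  set (c' := fun k => if Nat.eqb k m then - (lc m c phi x0 / phi m x0) else c k).
  assert (E : forall k, (k < m)%nat -> c' k = c k).
  { intros j Hj. unfold c'. destruct (Nat.eqb_spec j m); [lia|auto]. }
  rewrite <- E by auto. apply Hi; [|lia]. intros x Hx.
  rewrite (lc_eliminate m c' phi x0 x), (lc_ext m c' c _ _ x x), (lc_ext m c' c phi phi x0 x0) by auto.
  rewrite Hc by auto. unfold c'. rewrite Nat.eqb_refl. ring.
Qed.

Lemma indep_last_nonzero (D : X -> Prop) m phi : indep D (S m) phi -> exists x, D x /\ phi m x <> 0.
Proof.
  intros H. apply NNPP. intros C.
  assert (E : (fun k => if Nat.eqb k m then 1 else 0) m = 0).
  { apply (H (fun k => if Nat.eqb k m then 1 else 0)); [|lia].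
    intros x Hx. rewrite lc_S, lc_zero_coef, Nat.eqb_refl.
    - destruct (Req_dec (phi m x) 0) as [->|Hne]; [ring|]. exfalso; eauto.
    - intros k Hk. destruct (Nat.eqb_spec k m); [lia|auto]. }
  cbv beta in E. rewrite Nat.eqb_refl in E. lra.
Qed.

Lemma eliminate_bound m phi x0 K k x : 0 < K -> phi m x0 <> 0 ->
  Rabs (phi k x) <= K -> Rabs (phi k x0) <= K -> Rabs (phi m x) <= K ->
  Rabs (eliminate m phi x0 k x) <= K + K / Rabs (phi m x0) * K.
Proof.
  intros HK Hr B1 B2 B3. pose proof (Rinv_0_lt_compat _ (Rabs_pos_lt _ Hr)).
  unfold eliminate, Rdiv. eapply Rle_trans; [apply Rabs_triang|].
  rewrite Rabs_Ropp, !Rabs_mult, Rabs_inv. apply Rplus_le_compat; auto.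
  apply Rmult_le_compat; auto using Rabs_pos.
  - apply Rmult_le_pos; [apply Rabs_pos | lra].
  - apply Rmult_le_compat_r; lra.
Qed.

Lemma l1norm_S_le m c (phi : nat -> X -> R) x0 K : phi m x0 <> 0 ->
  (forall k, (k < m)%nat -> Rabs (phi k x0) <= K) ->
  l1norm (S m) c <= l1norm m c * (1 + K / Rabs (phi m x0)) + Rabs (c m + lc m c phi x0 / phi m x0).
Proof.
  intros Hr Hb. pose proof (Rabs_pos_lt _ Hr).
  assert (Hx0 : Rabs (lc m c phi x0 / phi m x0) <= l1norm m c * (K / Rabs (phi m x0))).
  { unfold Rdiv. rewrite Rabs_mult, Rabs_inv, <- Rmult_assoc.
    apply Rmult_le_compat_r; [left; apply Rinv_0_lt_compat; auto | apply lc_bound; auto]. }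
  pose proof (Rabs_triang (c m + lc m c phi x0 / phi m x0) (- (lc m c phi x0 / phi m x0))) as Htri.
  rewrite Rabs_Ropp in Htri.
  replace (c m + lc m c phi x0 / phi m x0 + - (lc m c phi x0 / phi m x0)) with (c m) in Htri by ring.
  rewrite l1norm_S. lra.
Qed.

(* Induction by elimination of the last function at a point x0 where it does not vanish: either the
   eliminated combination is large somewhere, or the coefficient of the last function is, and then
   the combination is large at x0. *)
Lemma indep_lower_bound (D : X -> Prop) : (exists x, D x) -> forall m phi K, 0 < K ->
  (forall k x, (k < m)%nat -> D x -> Rabs (phi k x) <= K) -> indep D m phi ->
  exists d, 0 < d /\ forall c, exists x, D x /\ d * l1norm m c <= Rabs (lc m c phi x).
Proof.
  intros [xD HxD]. induction m as [|m IH]; intros phi K HK Hb Hi.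
  { exists 1. split; [lra|]. intros c. exists xD. split; auto.
    unfold l1norm; simpl. rewrite Rmult_0_r. apply Rabs_pos. }
  destruct (indep_last_nonzero D m phi Hi) as [x0 [Hx0 Hr0]].
  set (r := Rabs (phi m x0)). assert (Hr : 0 < r) by (apply Rabs_pos_lt; auto).
  set (L := K / r). assert (HL : 0 <= L) by (apply Rdiv_le_0_compat; lra).
  destruct (IH (eliminate m phi x0) (K + L * K)) as [d' [Hd' Hq]].
  { pose proof (Rmult_le_pos L K HL (Rlt_le _ _ HK)). lra. }
  { intros k x Hk Hx. apply eliminate_bound; auto; apply Hb; auto. }
  { apply indep_eliminate; auto. }
  exists (Rmin (r * d' / (2 * (K + r) * (1 + L))) (r / 2)).
  split; [apply Rmin_pos; [apply Rdiv_lt_0_compat; [|apply Rmult_lt_0_compat]|]; nra|].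
  intros c. set (S' := l1norm m c). set (dd := c m + lc m c phi x0 / phi m x0).
  destruct (Hq c) as [x1 [Hx1 Hv]]. fold S' in Hv.
  assert (Hp : d' * S' - K * Rabs dd <= Rabs (lc (S m) c phi x1)).
  { rewrite (lc_eliminate m c phi x0 x1). fold dd.
    assert (Hb1 : Rabs (dd * phi m x1) <= Rabs dd * K)
      by (rewrite Rabs_mult; apply Rmult_le_compat_l; [apply Rabs_pos | apply Hb; auto]).
    pose proof (Rabs_triang_inv (lc m c (eliminate m phi x0) x1) (- (dd * phi m x1))) as Htri.
    rewrite Rabs_Ropp in Htri. unfold Rminus in Htri. rewrite Ropp_involutive in Htri. lra. }
  assert (Hq0 : r * Rabs dd <= Rabs (lc (S m) c phi x0)).
  { rewrite (lc_eliminate m c phi x0 x0), lc_zero_fun by (intros; apply eliminate_at; auto).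
    fold dd. rewrite Rplus_0_l, Rabs_mult. unfold r. lra. }
  assert (Hnorm : l1norm (S m) c <= S' * (1 + L) + Rabs dd)
    by (apply l1norm_S_le; auto; intros; apply Hb; auto).
  assert (Hfin := lower_bound_combine d' K r L S' (Rabs dd) _ _ HK Hr HL Hd' (l1norm_nonneg m c)
                    (Rabs_pos dd) Hp Hq0).
  set (d := Rmin (r * d' / (2 * (K + r) * (1 + L))) (r / 2)) in *.
  assert (Hd : 0 <= d) by (apply Rmin_glb; [apply Rdiv_le_0_compat|]; nra).
  assert (Hdn : d * l1norm (S m) c <= Rmax (Rabs (lc (S m) c phi x1)) (Rabs (lc (S m) c phi x0)))
    by (eapply Rle_trans; [apply Rmult_le_compat_l|]; eauto).
  destruct (Rle_dec (Rabs (lc (S m) c phi x0)) (Rabs (lc (S m) c phi x1))) as [Hle|Hlt].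
  - exists x1. split; auto. rewrite Rmax_left in Hdn by auto. exact Hdn.
  - exists x0. split; auto. rewrite Rmax_right in Hdn by lra. exact Hdn.
Qed.

End Elimination.

Lemma indep_solvable N p (r : nat -> nat -> R) : indep (fun k => (k < N)%nat) p r ->
  forall y, exists v, forall j, (j < p)%nat -> sum_lt N (fun k => r j k * v k) = y j.
Proof.
  revert r. induction p as [|p IH]; intros r Hi y.
  { exists (fun _ => 0). intros; lia. }
  destruct (indep_last_nonzero _ p r Hi) as [ks [Hks Hn]].
  set (a := fun j => r j ks / r p ks).
  destruct (IH (eliminate p r ks) (indep_eliminate _ p r ks Hi Hn) (fun j => y j - a j * y p))
    as [v' Hv'].
  set (mu := (y p - sum_lt N (fun k => r p k * v' k)) / r p ks).
  exists (fun k => v' k + (if Nat.eqb k ks then mu else 0)).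
  assert (Hupd : forall j, sum_lt N (fun k => r j k * (v' k + (if Nat.eqb k ks then mu else 0)))
                          = sum_lt N (fun k => r j k * v' k) + r j ks * mu).
  { intros j. rewrite <- (sum_lt_single N ks (r j ks * mu)), <- sum_lt_plus by auto.
    apply sum_lt_ext. intros k Hk. destruct (Nat.eqb_spec k ks) as [->|]; ring. }
  intros j Hj. rewrite Hupd. destruct (Nat.eq_dec j p) as [->|Hjp].
  - unfold mu. field. auto.
  - specialize (Hv' j ltac:(lia)). unfold eliminate in Hv'.
    rewrite (sum_lt_ext N _ (fun k => 1 * (r j k * v' k) + (- a j) * (r p k * v' k))),
      sum_lt_comb in Hv' by (intros; unfold a; ring).
    replace (sum_lt N (fun k => r j k * v' k))
      with (y j - a j * y p + a j * sum_lt N (fun k => r p k * v' k)) by lra.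
    unfold mu, a. field. auto.
Qed.

Lemma extend_last n (f : nat -> R -> R) g : extend n f g n = g.
Proof. unfold extend. rewrite Nat.eqb_refl. reflexivity. Qed.

Lemma extend_other n (f : nat -> R -> R) g k : k <> n -> extend n f g k = f k.
Proof. intros. unfold extend. destruct (Nat.eqb_spec k n); [lia|reflexivity]. Qed.

Lemma lc_extend n c (f : nat -> R -> R) g x : lc (S n) c (extend n f g) x = lc n c f x + c n * g x.
Proof.
  rewrite lc_S, extend_last. f_equal. apply lc_ext; auto. intros; rewrite extend_other; auto; lia.
Qed.

Lemma lincomb_lc m c f t : lincomb m c f t = lc m c f t.
Proof. induction m; simpl; [reflexivity|]. rewrite IHm. reflexivity. Qed.

Lemma lin_indep_iff m F : lin_indep m F <-> indep in_I m F.
Proof.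
  split; intros H c Hc; apply H; intros t Ht; [rewrite lincomb_lc | rewrite <- lincomb_lc]; auto.
Qed.

Lemma lin_indep_with_iff h m F : lin_indep_with h m F <-> indep in_I (S m) (extend m F h).
Proof.
  split.
  - intros H c Hc. destruct (H (c m) c) as [A B].
    { intros t Ht. specialize (Hc t Ht). rewrite lc_extend in Hc. rewrite lincomb_lc. lra. }
    intros k Hk. destruct (Nat.eq_dec k m) as [->|]; auto. apply B; lia.
  - intros H c0 c Hc.
    set (c' := fun k => if Nat.eqb k m then c0 else c k).
    assert (Hc' : forall k, (k < S m)%nat -> c' k = 0).
    { apply H. intros t Ht. rewrite lc_extend. unfold c'. rewrite Nat.eqb_refl, lc_update.
      specialize (Hc t Ht). rewrite lincomb_lc in Hc. lra. }
    split.
    + specialize (Hc' m ltac:(lia)). unfold c' in Hc'. rewrite Nat.eqb_refl in Hc'. auto.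
    + intros k Hk. specialize (Hc' k ltac:(lia)). unfold c' in Hc'.
      destruct (Nat.eqb_spec k m); [lia|auto].
Qed.

(** * Piecewise linear maps *)

Lemma RInt_lc m c (phi : nat -> R -> R) a b : (forall k, (k < m)%nat -> ex_RInt (phi k) a b) ->
  ex_RInt (fun x => lc m c phi x) a b /\
  RInt (fun x => lc m c phi x) a b = sum_lt m (fun k => c k * RInt (phi k) a b).
Proof.
  induction m as [|m IH]; intros H.
  - change (fun x => lc 0 c phi x) with (fun _ : R => 0).
    split; [apply ex_RInt_const|]. rewrite RInt_const_R. simpl; ring.
  - destruct IH as [E1 E2]; [intros; apply H; lia|].
    assert (E3 : ex_RInt (phi m) a b) by (apply H; lia).
    change (fun x => lc (S m) c phi x) with (fun x => lc m c phi x + c m * phi m x).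
    assert (E4 : ex_RInt (fun x => c m * phi m x) a b) by (apply ex_RInt_scal_R; auto).
    split; [apply ex_RInt_plus_R; auto|].
    rewrite (RInt_plus_R (fun x => lc m c phi x) (fun x => c m * phi m x)), (RInt_scal_R (phi m)), E2
      by auto.
    reflexivity.
Qed.

Lemma RInt_nodes (F : R -> R) (y : nat -> R) M :
  (forall k, (k < M)%nat -> ex_RInt F (y k) (y (S k))) ->
  RInt F (y O) (y M) = sum_lt M (fun k => RInt F (y k) (y (S k))).
Proof.
  intros H. enough (ex_RInt F (y O) (y M) /\ RInt F (y O) (y M) = sum_lt M (fun k => RInt F (y k) (y (S k))))
    by tauto.
  induction M as [|M IH]; simpl.
  - split; [apply ex_RInt_point | apply RInt_point_R].
  - destruct IH as [E1 E2]; [intros; apply H; lia|].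
    assert (E3 : ex_RInt F (y M) (y (S M))) by (apply H; lia).
    split; [eapply ex_RInt_Chasles; eauto|]. rewrite <- E2. symmetry. apply RInt_Chasles_R; auto.
Qed.

Lemma RInt_id a b : RInt (fun x => x) a b = (b * b - a * a) / 2 :> R.
Proof.
  apply is_RInt_unique.
  replace ((b * b - a * a) / 2) with (minus ((fun x => x * x / 2) b) ((fun x => x * x / 2) a))
    by (unfold minus, plus, opp; simpl; field).
  apply (is_RInt_derive (V := R_CompleteNormedModule) (fun x => x * x / 2)).
  - intros x _. auto_derive; auto. field.
  - intros x _. apply continuous_id.
Qed.

Lemma RInt_G_eq_opp_Q_id g : inG g -> RInt g (-1) 1 = - Q idI g.
Proof.
  intros Hg. pose proof (RInt_add_RInt_ginv g Hg).
  change (Q idI g) with (RInt (ginv g) (-1) 1). lra.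
Qed.

(* [ramp a b x] is the length of [a, b] below [x], so [pl xn N c] starts at -1 and has slope
   [c k] on [xn k, xn (S k)]. *)
Definition ramp (a b x : R) : R := Rmax 0 (Rmin x b - a).

Lemma ramp_lipschitz a b x y : Rabs (ramp a b x - ramp a b y) <= Rabs (x - y).
Proof. unfold ramp, Rmax, Rmin. repeat destruct Rle_dec; split_Rabs; lra. Qed.

Lemma ramp_low a b x : x <= a -> ramp a b x = 0.
Proof. unfold ramp, Rmax, Rmin. intros; repeat destruct Rle_dec; lra. Qed.

Lemma ramp_high a b x : a <= b -> b <= x -> ramp a b x = b - a.
Proof. unfold ramp, Rmax, Rmin. intros; repeat destruct Rle_dec; lra. Qed.

Lemma ramp_mid a b x : a <= x <= b -> ramp a b x = x - a.
Proof. unfold ramp, Rmax, Rmin. intros; repeat destruct Rle_dec; lra. Qed.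

Lemma ramp_mono a b x y : x <= y -> ramp a b x <= ramp a b y.
Proof. unfold ramp, Rmax, Rmin. intros; repeat destruct Rle_dec; lra. Qed.

Definition pl (xn : nat -> R) (N : nat) (c : nat -> R) (x : R) : R :=
  -1 + lc N c (fun k => ramp (xn k) (xn (S k))) x.

Section PiecewiseLinear.
Variable xn : nat -> R.
Variable N : nat.
Hypothesis nodes_0 : xn O = -1.
Hypothesis nodes_N : xn N = 1.
Hypothesis nodes_lt : forall k, (k < N)%nat -> xn k < xn (S k).

Lemma nodes_le a b : (a <= b <= N)%nat -> xn a <= xn b.
Proof.
  intros Hab. induction b as [|b IH]; [replace a with O by lia; lra|].
  destruct (Nat.eq_dec a (S b)) as [->|]; [lra|].
  specialize (IH ltac:(lia)). specialize (nodes_lt b ltac:(lia)). lra.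
Qed.

Lemma nodes_in_I k : (k <= N)%nat -> in_I (xn k).
Proof. intros. split; [rewrite <- nodes_0 | rewrite <- nodes_N]; apply nodes_le; lia. Qed.

Let ramps := fun k => ramp (xn k) (xn (S k)).

Lemma sum_ramps M x : (M <= N)%nat -> -1 <= x -> lc M (fun _ => 1) ramps x = Rmin x (xn M) + 1.
Proof.
  induction M as [|M IH]; intros HM Hx; rewrite ?lc_S.
  - rewrite nodes_0. unfold lc; simpl. unfold Rmin; destruct Rle_dec; lra.
  - rewrite IH by (lia || lra). specialize (nodes_lt M ltac:(lia)).
    unfold ramps, ramp, Rmin, Rmax. repeat destruct Rle_dec; lra.
Qed.

Variable c : nat -> R.

Lemma pl_sub x y : pl xn N c y - pl xn N c x = sum_lt N (fun k => c k * (ramps k y - ramps k x)).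
Proof.
  unfold pl, lc.
  rewrite (sum_lt_ext N (fun k => c k * (ramps k y - ramps k x)) (fun k => c k * ramps k y - c k * ramps k x))
    by (intros; ring).
  rewrite sum_lt_minus. unfold ramps. ring.
Qed.

Lemma pl_m1 : pl xn N c (-1) = -1.
Proof.
  unfold pl. rewrite lc_zero_fun; [ring|]. intros k Hk. apply ramp_low.
  rewrite <- nodes_0. apply nodes_le; lia.
Qed.

Lemma pl_piece k x : (k < N)%nat -> xn k <= x <= xn (S k) ->
  pl xn N c x = pl xn N c (xn k) + c k * (x - xn k).
Proof.
  intros Hk Hx. enough (pl xn N c x - pl xn N c (xn k) = c k * (x - xn k)) by lra.
  rewrite pl_sub, <- (sum_lt_single N k (c k * (x - xn k))) by auto.
  apply sum_lt_ext. intros l Hl. unfold ramps. destruct (Nat.eqb_spec l k) as [->|Hne].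
  - rewrite ramp_mid, ramp_low by lra. ring.
  - destruct (Nat.lt_ge_cases l k).
    + assert (xn l < xn (S l)) by auto. assert (xn (S l) <= xn k) by (apply nodes_le; lia).
      rewrite !ramp_high by lra. ring.
    + assert (xn (S k) <= xn l) by (apply nodes_le; lia).
      rewrite !ramp_low by lra. ring.
Qed.

Variable mu : R.
Hypothesis slopes_pos : 0 < mu.
Hypothesis slopes_ge : forall k, (k < N)%nat -> mu <= c k.
Hypothesis slopes_total : sum_lt N (fun k => c k * (xn (S k) - xn k)) = 2.

Lemma pl_1 : pl xn N c 1 = 1.
Proof.
  unfold pl, lc. rewrite (sum_lt_ext N _ (fun k => c k * (xn (S k) - xn k))), slopes_total; [ring|].
  intros k Hk. unfold ramps. rewrite ramp_high; [auto| left; auto |].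
  rewrite <- nodes_N. apply nodes_le; lia.
Qed.

Lemma pl_increment x y : -1 <= x -> x <= y -> y <= 1 -> mu * (y - x) <= pl xn N c y - pl xn N c x.
Proof.
  intros Hx Hxy Hy. rewrite pl_sub.
  assert (E : sum_lt N (fun k => mu * (ramps k y - ramps k x)) = mu * (y - x)).
  { rewrite (sum_lt_ext N _ (fun k => mu * (1 * ramps k y) + (- mu) * (1 * ramps k x))) by (intros; ring).
    rewrite sum_lt_comb. fold (lc N (fun _ => 1) ramps y) (lc N (fun _ => 1) ramps x).
    rewrite !sum_ramps, nodes_N by (auto; lra). unfold Rmin; repeat destruct Rle_dec; lra. }
  rewrite <- E. apply sum_lt_le. intros k Hk. apply Rmult_le_compat_r; [|auto].
  pose proof (ramp_mono (xn k) (xn (S k)) x y Hxy). unfold ramps. lra.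
Qed.

Lemma pl_G : inG (pl xn N c).
Proof.
  assert (Hinc : forall s t, in_I s -> in_I t -> s < t -> pl xn N c s < pl xn N c t).
  { intros s t Hs Ht Hst. unfold in_I in *. pose proof (pl_increment s t ltac:(lra) ltac:(lra) ltac:(lra)).
    nra. }
  split; [|split; [|split; [|split]]]; auto using pl_m1, pl_1.
  - intros t Ht. destruct (Ht) as [H1 H2]. split.
    + destruct H1 as [H1| <-]; [rewrite <- pl_m1; left; apply Hinc; auto using in_I_m1 | rewrite pl_m1; lra].
    + destruct H2 as [H2| ->]; [rewrite <- pl_1; left; apply Hinc; auto using in_I_1 | rewrite pl_1; lra].
  - apply cont_on_I_of_continuous. intros x.
    apply continuous_of_lipschitz with (l1norm N c); [apply l1norm_nonneg|].
    intros y z. replace (pl xn N c y - pl xn N c z) with (lc N c ramps y - lc N c ramps z)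
      by (unfold pl, ramps; ring).
    apply lc_dist. intros; apply ramp_lipschitz.
Qed.

(* On a cell [pl] is affine with slope [c k], so [t = pl s] is a linear change of variables there. *)
Lemma RInt_comp_ginv_pl_cell h k : cont_on_I h -> (k < N)%nat ->
  RInt (fun t => h (ginv (pl xn N c) t)) (pl xn N c (xn k)) (pl xn N c (xn (S k)))
  = c k * RInt h (xn k) (xn (S k)).
Proof.
  intros Hh Hk. set (g := pl xn N c). assert (HG : inG g) by apply pl_G.
  assert (Hck : 0 < c k) by (specialize (slopes_ge k Hk); lra).
  specialize (nodes_lt k Hk) as Hxk.
  assert (Ik : in_I (xn k)) by (apply nodes_in_I; lia).
  assert (ISk : in_I (xn (S k))) by (apply nodes_in_I; lia).
  assert (Py : g (xn (S k)) = g (xn k) + c k * (xn (S k) - xn k)) by (apply pl_piece; auto; lra).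
  set (u := / c k). set (v := xn k - g (xn k) / c k).
  assert (Eu1 : u * g (xn k) + v = xn k) by (unfold u, v; field; lra).
  assert (Eu2 : u * g (xn (S k)) + v = xn (S k)) by (unfold u, v; rewrite Py; field; lra).
  rewrite (RInt_ext _ (fun t => c k * (u * h (u * t + v)))).
  - assert (E := RInt_comp_lin (V := R_CompleteNormedModule) h u v (g (xn k)) (g (xn (S k)))).
    assert (Ex := ex_RInt_comp_lin (V := R_NormedModule) h u v (g (xn k)) (g (xn (S k)))).
    assert (Hint : ex_RInt h (xn k) (xn (S k))) by (apply ex_RInt_cont_on_I; auto).
    rewrite Eu1, Eu2 in E, Ex. rewrite RInt_scal_R; [f_equal; apply E, Hint | apply Ex, Hint].
  - intros t Ht. assert (g (xn k) < g (xn (S k))) by (rewrite Py; nra).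
    rewrite Rmin_left, Rmax_right in Ht by lra.
    set (s := u * t + v).
    assert (Hs : xn k <= s <= xn (S k)).
    { unfold s. rewrite <- Eu1, <- Eu2. assert (0 < u) by (apply Rinv_0_lt_compat; auto). nra. }
    assert (Is : in_I s) by (unfold in_I in *; lra).
    assert (Egs : g s = t) by (unfold g; rewrite (pl_piece k s Hk Hs); fold g; unfold s, u, v; field; lra).
    rewrite <- Egs, (ginv_f g HG s Is). change (h s = c k * (u * h s)). unfold u. field. lra.
Qed.

Lemma Q_pl h : cont_on_I h ->
  Q h (pl xn N c) = sum_lt N (fun k => c k * RInt h (xn k) (xn (S k))).
Proof.
  intros Hh. assert (HG : inG (pl xn N c)) by apply pl_G.
  unfold Q. rewrite <- (G_m1 _ HG), <- (G_1 _ HG) at 1. rewrite <- nodes_0, <- nodes_N at 1.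
  rewrite (RInt_nodes _ (fun k => pl xn N c (xn k)))
    by (intros; apply ex_RInt_comp_ginv; auto; apply G_in_I, nodes_in_I; auto; lia).
  apply sum_lt_ext. intros k Hk. apply RInt_comp_ginv_pl_cell; auto.
Qed.

End PiecewiseLinear.

(** * Prescribing the values Q(f_j, g) *)

Lemma cont_family_uniform m (phi : nat -> R -> R) : (forall k, (k < m)%nat -> cont_on_I (phi k)) ->
  forall tau, 0 < tau -> exists eta, 0 < eta /\ forall k x y, (k < m)%nat -> in_I x -> in_I y ->
    Rabs (x - y) < eta -> Rabs (phi k x - phi k y) < tau.
Proof.
  induction m as [|m IH]; intros H tau Ht.
  { exists 1. split; [lra|]. intros; lia. }
  destruct (IH ltac:(intros; apply H; lia) tau Ht) as [e1 [He1 P1]].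
  destruct (cont_on_I_uniform (phi m) (H m ltac:(lia)) tau Ht) as [e2 [He2 P2]].
  exists (Rmin e1 e2). split; [apply Rmin_pos; auto|]. intros k x y Hk Hx Hy Hxy.
  pose proof (Rmin_l e1 e2). pose proof (Rmin_r e1 e2).
  destruct (Nat.eq_dec k m) as [->|]; [apply P2 | apply P1]; auto; lia || lra.
Qed.

Lemma RInt_neq0_of_near h a b v e : a < b -> ex_RInt h a b -> e < Rabs v ->
  (forall x, a < x < b -> Rabs (h x - v) <= e) -> RInt h a b <> 0.
Proof.
  intros Hab Ex Hv Hh. destruct (Rle_dec 0 v).
  - rewrite Rabs_right in Hv by lra.
    assert ((b - a) * (v - e) <= RInt h a b) by
      (apply RInt_bounds with (hi := v + e); auto; [lra|];
       intros x Hx; specialize (Hh x Hx); split_Rabs; lra).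
    nra.
  - rewrite Rabs_left in Hv by lra.
    assert (RInt h a b <= (b - a) * (v + e)) by
      (apply RInt_bounds with (lo := v - e); auto; [lra|];
       intros x Hx; specialize (Hh x Hx); split_Rabs; lra).
    nra.
Qed.

Lemma cell_indep m (phi : nat -> R -> R) K : 0 < K ->
  (forall k, (k < m)%nat -> cont_on_I (phi k)) ->
  (forall k x, (k < m)%nat -> in_I x -> Rabs (phi k x) <= K) -> indep in_I m phi ->
  exists N, (0 < N)%nat /\
    indep (fun k => (k < N)%nat) m (fun j k => RInt (phi j) (grid N k) (grid N (S k))).
Proof.
  intros HK Hc Hb Hi.
  destruct (indep_lower_bound in_I (ex_intro _ _ in_I_1) m phi K HK Hb Hi) as [d [Hd Hq]].
  destruct (cont_family_uniform m phi Hc (d / 2) ltac:(lra)) as [eta [Heta Hu]].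
  destruct (archimed_cor1 (eta / 2) ltac:(lra)) as [N [HN1 HN2]].
  exists N. split; auto. intros c Hc0.
  destruct (Req_dec (l1norm m c) 0) as [E|E]; [apply l1norm_eq0; auto|]. exfalso.
  assert (Hs : 0 < l1norm m c) by (pose proof (l1norm_nonneg m c); lra).
  destruct (Hq c) as [t [It Ht]].
  destruct (grid_cell N HN2 t It) as [k0 [Hk0 Hcell]].
  set (a := grid N k0) in *. set (b := grid N (S k0)) in *.
  assert (Hab : a < b) by apply grid_lt, HN2.
  assert (Ia : in_I a) by (apply grid_in_I; lia). assert (Ib : in_I b) by (apply grid_in_I; lia).
  assert (Hw : b - a < eta).
  { unfold a, b. rewrite grid_step by auto. pose proof (lt_0_INR N HN2).
    apply Rlt_le_trans with (2 * (eta / 2)); [|lra]. unfold Rdiv. apply Rmult_lt_compat_l; lra. }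
  destruct (RInt_lc m c phi a b) as [Ex Eq]; [intros; apply ex_RInt_cont_on_I; auto|].
  apply (RInt_neq0_of_near (fun x => lc m c phi x) a b (lc m c phi t) (l1norm m c * (d / 2)) Hab Ex).
  - nra.
  - intros x Hx. apply lc_dist. intros j Hj. left. apply Hu; auto.
    + unfold in_I in *; lra.
    + apply Rabs_def1; lra.
  - rewrite Eq. apply (Hc0 k0 Hk0).
Qed.

Definition moment_family n (f : nat -> R -> R) : nat -> R -> R :=
  extend (S n) (extend n f idI) (fun _ => 1).

Lemma moment_family_f n f j : (j < n)%nat -> moment_family n f j = f j.
Proof. intros. unfold moment_family. rewrite !extend_other by lia. reflexivity. Qed.

Lemma moment_family_id n f : moment_family n f n = idI.
Proof. unfold moment_family. rewrite extend_other by lia. apply extend_last. Qed.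

Lemma moment_family_one n f : moment_family n f (S n) = fun _ => 1.
Proof. apply extend_last. Qed.

Lemma moment_family_cont n f k : all_G0 n f -> (k < S (S n))%nat -> cont_on_I (moment_family n f k).
Proof.
  intros HG Hk. destruct (Nat.eq_dec k (S n)) as [->|]; [rewrite moment_family_one; apply cont_on_I_const|].
  destruct (Nat.eq_dec k n) as [->|]; [rewrite moment_family_id; apply cont_on_I_id|].
  rewrite moment_family_f by lia. apply G_cont, HG; lia.
Qed.

Lemma moment_family_bound n f k x : all_G0 n f -> (k < S (S n))%nat -> in_I x ->
  Rabs (moment_family n f k x) <= 1.
Proof.
  intros HG Hk Hx. destruct (Nat.eq_dec k (S n)) as [->|].
  { rewrite moment_family_one, Rabs_R1. lra. }
  destruct (Nat.eq_dec k n) as [->|]; [rewrite moment_family_id; apply Rabs_le_1_of_in_I; auto|].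
  rewrite moment_family_f by lia. apply G_bound; auto. apply HG; lia.
Qed.

(* Evaluating at t = 1 and t = -1 and adding kills every f_j (as f_j(+-1) = +-1) and the identity,
   leaving twice the coefficient of the constant. *)
Lemma moment_family_indep n f : all_G0 n f -> lin_indep_with idI n f ->
  indep in_I (S (S n)) (moment_family n f).
Proof.
  intros HG HL c Hc.
  assert (E : forall t, lc (S (S n)) c (moment_family n f) t = lc n c f t + c n * t + c (S n)).
  { intros t. unfold moment_family. rewrite !lc_extend. unfold idI. ring. }
  assert (Hends : lc n c f (-1) = - lc n c f 1).
  { unfold lc. rewrite (sum_lt_ext n (fun k => c k * f k (-1)) (fun k => c k * f k 1 * (-1))).
    - rewrite sum_lt_mult_r. ring.
    - intros k Hk. rewrite (G_m1 (f k)), (G_1 (f k)) by (apply HG; auto). ring. }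
  assert (A1 := Hc 1 in_I_1). assert (A2 := Hc (-1) in_I_m1). rewrite E in A1, A2.
  assert (C1 : c (S n) = 0) by lra.
  destruct (HL (c n) c) as [C2 C3].
  { intros t Ht. rewrite lincomb_lc. specialize (Hc t Ht). rewrite E, C1 in Hc. unfold idI. lra. }
  intros k Hk. destruct (Nat.eq_dec k (S n)) as [->|]; auto.
  destruct (Nat.eq_dec k n) as [->|]; auto. apply C3; lia.
Qed.

Lemma sum_cells_RInt N h : (0 < N)%nat -> cont_on_I h ->
  sum_lt N (fun k => RInt h (grid N k) (grid N (S k))) = RInt h (-1) 1.
Proof.
  intros HN Hh. rewrite <- (grid_0 N HN), <- (grid_N N HN) at 1. symmetry.
  apply RInt_nodes. intros k Hk. apply ex_RInt_cont_on_I; auto; apply grid_in_I; lia.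
Qed.

Lemma grid_pl_perturbed N (s : nat -> R) eps : (0 < N)%nat -> 0 <= eps -> eps * l1norm N s <= 1 / 2 ->
  sum_lt N (fun k => s k * (grid N (S k) - grid N k)) = 0 ->
  inG (pl (grid N) N (fun k => 1 + eps * s k)) /\
  forall h, cont_on_I h -> Q h (pl (grid N) N (fun k => 1 + eps * s k))
    = RInt h (-1) 1 + eps * sum_lt N (fun k => s k * RInt h (grid N k) (grid N (S k))).
Proof.
  intros HN Heps Hsmall Hlen. set (c := fun k => 1 + eps * s k).
  assert (Hc : forall k, (k < N)%nat -> 1 / 2 <= c k).
  { intros k Hk. assert (Rabs (eps * s k) <= 1 / 2).
    { rewrite Rabs_mult, (Rabs_pos_eq eps) by lra.
      apply Rle_trans with (eps * l1norm N s); auto.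
      apply Rmult_le_compat_l; [lra | apply Rabs_le_l1norm; auto]. }
    unfold c. split_Rabs; lra. }
  assert (Hsum : forall h, cont_on_I h -> sum_lt N (fun k => c k * RInt h (grid N k) (grid N (S k)))
                 = RInt h (-1) 1 + eps * sum_lt N (fun k => s k * RInt h (grid N k) (grid N (S k)))).
  { intros h Hh.
    rewrite <- (sum_cells_RInt N h HN Hh), <- (Rmult_1_l (sum_lt N (fun k => RInt h _ _))), <- sum_lt_comb.
    apply sum_lt_ext. intros; unfold c; ring. }
  assert (Htotal : sum_lt N (fun k => c k * (grid N (S k) - grid N k)) = 2).
  { rewrite (sum_lt_ext N _
      (fun k => 1 * (grid N (S k) - grid N k) + eps * (s k * (grid N (S k) - grid N k))))
      by (intros; unfold c; ring).
    rewrite sum_lt_comb, Hlen, (sum_lt_ext N _ (fun k => RInt (fun _ => 1) (grid N k) (grid N (S k))))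
      by (intros; rewrite RInt_const_R; ring).
    rewrite sum_cells_RInt, RInt_const_R by (auto using cont_on_I_const). ring. }
  split.
  - apply (pl_G _ N (grid_0 N HN) (grid_N N HN) (fun k _ => grid_lt N HN k) c (1 / 2)); auto; lra.
  - intros h Hh. rewrite <- Hsum by auto.
    apply (Q_pl _ N (grid_0 N HN) (grid_N N HN) (fun k _ => grid_lt N HN k) c (1 / 2)); auto; lra.
Qed.

(* Q(h, g) is affine in the slope perturbation s of [grid_pl_perturbed]; solving for s against the
   moment family (f_0, ..., f_(n-1), id, 1) prescribes Q(f_j, g), keeps the total rise 2 and makes
   the integral of g, which is -Q(id, g), vanish. *)
Lemma Q_realization n f (T : nat -> R) : all_G0 n f -> lin_indep_with idI n f ->
  exists g eps, 0 < eps /\ inG0 g /\ forall j, (j < n)%nat -> Q (f j) g = eps * T j.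
Proof.
  intros HG HL. set (Phi := moment_family n f).
  destruct (cell_indep (S (S n)) Phi 1 ltac:(lra) (fun k => moment_family_cont n f k HG)
              (fun k x => moment_family_bound n f k x HG) (moment_family_indep n f HG HL)) as [N [HN Hi]].
  destruct (indep_solvable N (S (S n)) _ Hi (fun j => if Nat.ltb j n then T j else 0)) as [s Hs].
  assert (Hrow : forall j, (j < S (S n))%nat ->
            sum_lt N (fun k => s k * RInt (Phi j) (grid N k) (grid N (S k)))
            = if Nat.ltb j n then T j else 0).
  { intros j Hj. rewrite <- (Hs j Hj). apply sum_lt_ext. intros; ring. }
  assert (Hone := Hrow (S n) ltac:(lia)). assert (Hid := Hrow n ltac:(lia)).
  unfold Phi in Hone, Hid. rewrite moment_family_one in Hone. rewrite moment_family_id in Hid.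
  destruct (Nat.ltb_spec (S n) n), (Nat.ltb_spec n n); try lia.
  set (eps := / (2 * (1 + l1norm N s))).
  assert (Hnorm := l1norm_nonneg N s).
  assert (Heps : 0 < eps) by (apply Rinv_0_lt_compat; lra).
  destruct (grid_pl_perturbed N s eps HN ltac:(lra)) as [HGg HQ].
  { unfold eps. apply (Rmult_le_reg_r (2 * (1 + l1norm N s))); [lra|]. field_simplify; lra. }
  { rewrite <- Hone. apply sum_lt_ext. intros; rewrite RInt_const_R; ring. }
  exists (pl (grid N) N (fun k => 1 + eps * s k)), eps. split; [|split; [split|]]; auto.
  - change (RInt (pl (grid N) N (fun k => 1 + eps * s k)) (-1) 1 = 0 :> R).
    rewrite RInt_G_eq_opp_Q_id, HQ, Hid by auto using cont_on_I_id.
    change (RInt idI (-1) 1) with (RInt (fun x => x) (-1) 1). rewrite RInt_id. lra.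
  - intros j Hj. rewrite HQ, (proj2 (HG j Hj)) by (apply G_cont, HG; auto).
    specialize (Hrow j ltac:(lia)). unfold Phi in Hrow. rewrite moment_family_f in Hrow by auto.
    destruct (Nat.ltb_spec j n); [|lia]. rewrite Hrow. ring.
Qed.

(** * Spans and their complements *)

Definition in_span m (Phi : nat -> R -> R) (h : R -> R) : Prop :=
  exists c, forall t, in_I t -> h t = lc m c Phi t.

Definition lincomb_closed (P : (R -> R) -> Prop) : Prop :=
  forall a b u v, cont_on_I u -> cont_on_I v -> P u -> P v -> P (fun t => a * u t + b * v t).

Lemma in_span_closed m Phi : lincomb_closed (in_span m Phi).
Proof.
  intros a b u v _ _ [c1 H1] [c2 H2]. exists (fun k => a * c1 k + b * c2 k). intros t Ht.
  rewrite lc_comb_coef, <- H1, <- H2; auto.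
Qed.

Lemma fe_comb a b u v t : fe (fun t => a * u t + b * v t) t = a * fe u t + b * fe v t.
Proof. unfold fe. field. Qed.

Lemma fe_in_span_closed m Phi : lincomb_closed (fun g => in_span m Phi (fe g)).
Proof.
  intros a b u v Hu Hv [c1 H1] [c2 H2]. exists (fun k => a * c1 k + b * c2 k). intros t Ht.
  rewrite fe_comb, lc_comb_coef, <- H1, <- H2; auto.
Qed.

Lemma fe_bound h t : inG h -> in_I t -> Rabs (fe h t) <= 1.
Proof.
  intros Hh Ht. pose proof (G_in_I h Hh t Ht). pose proof (G_in_I h Hh (- t) (in_I_opp t Ht)).
  unfold fe, in_I in *. apply Rabs_le. lra.
Qed.

Lemma fe_extend n f g k : fe (extend n f g k) = extend n (fun j => fe (f j)) (fe g) k.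
Proof. destruct (Nat.eq_dec k n) as [->|]; [rewrite !extend_last | rewrite !extend_other]; auto. Qed.

Lemma indep_extend_iff m Phi h : indep in_I m Phi ->
  (indep in_I (S m) (extend m Phi h) <-> ~ in_span m Phi h).
Proof.
  intros Hi. split.
  - intros H [c Hc].
    assert (Z := H (fun k => if Nat.eqb k m then -1 else c k)).
    assert (Zm : (fun k => if Nat.eqb k m then -1 else c k) m = 0).
    { apply Z; [|lia]. intros t Ht. rewrite lc_extend, Nat.eqb_refl, lc_update, <- Hc by auto. ring. }
    cbv beta in Zm. rewrite Nat.eqb_refl in Zm. lra.
  - intros Hn c Hc.
    assert (Hm : c m = 0).
    { apply NNPP. intros Hcm. apply Hn. exists (fun k => - c k / c m). intros t Ht.
      specialize (Hc t Ht). rewrite lc_extend in Hc. unfold lc in *.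
      rewrite (sum_lt_ext m _ (fun k => c k * Phi k t * (- / c m))) by (intros; unfold Rdiv; ring).
      rewrite sum_lt_mult_r. apply (Rmult_eq_reg_l (c m)); auto. field_simplify; auto. lra. }
    intros k Hk. destruct (Nat.eq_dec k m) as [->|]; auto. apply Hi; [|lia].
    intros t Ht. specialize (Hc t Ht). rewrite lc_extend, Hm in Hc. lra.
Qed.

Lemma indep_perturb {X} (D : X -> Prop) m (Phi Phi' : nat -> X -> R) d : 0 < d ->
  (forall c, exists x, D x /\ d * l1norm m c <= Rabs (lc m c Phi x)) ->
  (forall k x, (k < m)%nat -> D x -> Rabs (Phi' k x - Phi k x) <= d / 2) -> indep D m Phi'.
Proof.
  intros Hd Hq Hp c Hc.
  destruct (Req_dec (l1norm m c) 0) as [E|E]; [apply l1norm_eq0; auto|]. exfalso.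
  assert (Hs : 0 < l1norm m c) by (pose proof (l1norm_nonneg m c); lra).
  destruct (Hq c) as [x [Hx Hlow]].
  assert (Hdist := lc_dist m c Phi' Phi x x (d / 2) (fun k Hk => Hp k x Hk Hx)).
  rewrite Hc, Rminus_0_l, Rabs_Ropp in Hdist by auto. nra.
Qed.

(* Members of the span bounded by 1 have coefficients of l1-norm at most 1 / d
   ([indep_lower_bound]), so they are uniformly equicontinuous. *)
Lemma not_in_span_of_steep m Phi : (forall k, (k < m)%nat -> cont_on_I (Phi k)) ->
  (forall k x, (k < m)%nat -> in_I x -> Rabs (Phi k x) <= 1) -> indep in_I m Phi ->
  forall s, 0 < s -> exists eta, 0 < eta /\ forall h, (forall t, in_I t -> Rabs (h t) <= 1) ->
    forall x y, in_I x -> in_I y -> Rabs (y - x) < eta -> s <= h y - h x -> ~ in_span m Phi h.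
Proof.
  intros Hc Hb Hi s Hs.
  destruct (indep_lower_bound in_I (ex_intro _ _ in_I_1) m Phi 1 ltac:(lra) Hb Hi) as [d [Hd Hq]].
  destruct (cont_family_uniform m Phi Hc (d * s / 2)) as [eta [Heta Hu]];
    [apply Rmult_lt_0_compat; [apply Rmult_lt_0_compat|]; lra|].
  exists eta. split; auto. intros h Hh x y Hx Hy Hxy Hst [c Hspan].
  destruct (Hq c) as [t0 [It0 Ht0]]. rewrite <- Hspan in Ht0 by auto.
  specialize (Hh t0 It0).
  assert (D : Rabs (lc m c Phi y - lc m c Phi x) <= l1norm m c * (d * s / 2))
    by (apply lc_dist; intros k Hk; left; apply Hu; auto).
  rewrite <- !Hspan in D by auto.
  assert (l1norm m c * (d * s / 2) <= s / 2).
  { replace (l1norm m c * (d * s / 2)) with ((d * l1norm m c) * (s / 2)) by field.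
    rewrite <- (Rmult_1_l (s / 2)) at 2. apply Rmult_le_compat_r; lra. }
  revert D. split_Rabs; lra.
Qed.

Lemma not_in_span_near m Phi h : (forall k x, (k < m)%nat -> in_I x -> Rabs (Phi k x) <= 1) ->
  (forall x, in_I x -> Rabs (h x) <= 1) -> indep in_I m Phi -> ~ in_span m Phi h ->
  exists e, 0 < e /\ forall h', (forall t, in_I t -> Rabs (h' t - h t) <= e) -> ~ in_span m Phi h'.
Proof.
  intros Hb Hh Hi Hn. apply (indep_extend_iff m Phi h Hi) in Hn.
  destruct (indep_lower_bound in_I (ex_intro _ _ in_I_1) (S m) (extend m Phi h) 1 ltac:(lra)) as [d [Hd Hq]];
    auto.
  { intros k x Hk Hx. destruct (Nat.eq_dec k m) as [->|]; [rewrite extend_last | rewrite extend_other]; auto.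
    apply Hb; auto; lia. }
  exists (d / 2). split; [lra|]. intros h' Hh'. apply (indep_extend_iff m Phi h' Hi).
  apply (indep_perturb in_I (S m) (extend m Phi h) _ d Hd Hq). intros k x Hk Hx.
  destruct (Nat.eq_dec k m) as [->|]; [rewrite !extend_last; auto | rewrite !extend_other by auto].
  rewrite Rminus_diag, Rabs_R0. lra.
Qed.

Definition near_G0 (P : (R -> R) -> Prop) (g : R -> R) : Prop :=
  exists e, 0 < e /\ forall g', inG0 g' -> sup_close g g' e -> P g'.

Lemma sup_close_le g g' e e' : e <= e' -> sup_close g g' e -> sup_close g g' e'.
Proof. intros H1 H2 t Ht. specialize (H2 t Ht). lra. Qed.

Lemma near_G0_and P1 P2 g : near_G0 P1 g -> near_G0 P2 g -> near_G0 (fun g' => P1 g' /\ P2 g') g.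
Proof.
  intros [e1 [He1 H1]] [e2 [He2 H2]]. exists (Rmin e1 e2). split; [apply Rmin_pos; auto|].
  intros g' Hg' Hc. split; [apply H1 | apply H2]; auto; eapply sup_close_le; eauto;
    [apply Rmin_l | apply Rmin_r].
Qed.

Lemma near_G0_forall_lt n (P : nat -> (R -> R) -> Prop) g :
  (forall j, (j < n)%nat -> near_G0 (P j) g) -> near_G0 (fun g' => forall j, (j < n)%nat -> P j g') g.
Proof.
  induction n as [|n IH]; intros H.
  { exists 1. split; [lra|]. intros; lia. }
  destruct (near_G0_and _ _ g (IH ltac:(auto)) (H n ltac:(lia))) as [e [He He']].
  exists e. split; auto. intros g' Hg' Hc j Hj. destruct (He' g' Hg' Hc) as [A B].
  destruct (Nat.eq_dec j n) as [->|]; auto. apply A; lia.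
Qed.

(** * Steep maps lie outside the spans *)

(* The rise [steep_rise eta] on the first piece is the value making the integral vanish. *)
Definition steep_rise (eta : R) : R := (11 / 8 - eta / 4) / (1 + eta / 2).

Definition steep_nodes (eta : R) (k : nat) : R :=
  match k with O => -1 | 1 => 1 / 2 - eta | 2 => 1 / 2 | _ => 1 end.

Definition steep_slopes (eta : R) (k : nat) : R :=
  match k with
  | O => steep_rise eta / (3 / 2 - eta)
  | 1 => 1 / (2 * eta)
  | _ => 2 * (3 / 2 - steep_rise eta)
  end.

Lemma steep_G0 eta : 0 < eta <= 1 / 5 -> exists w, inG0 w /\
  w (1 / 2) - w (1 / 2 - eta) = 1 / 2 /\ w (-1 / 2 + eta) - w (-1 / 2) <= 1 / 4.
Proof.
  intros He.
  assert (HA1 : 0 < steep_rise eta) by (unfold steep_rise; apply Rdiv_lt_0_compat; lra).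
  assert (HA2 : steep_rise eta <= 11 / 8)
    by (unfold steep_rise; apply (Rmult_le_reg_r (1 + eta / 2)); [lra | field_simplify; lra]).
  assert (Hinc : forall k, (k < 3)%nat -> steep_nodes eta k < steep_nodes eta (S k))
    by (intros k Hk; destruct k as [|[|[|k]]]; try lia; simpl; lra).
  set (mu := Rmin (steep_slopes eta 0) (Rmin (steep_slopes eta 1) (steep_slopes eta 2))).
  assert (Hslope : forall k, (k < 3)%nat -> mu <= steep_slopes eta k).
  { intros k Hk. destruct k as [|[|[|k]]]; try lia.
    - apply Rmin_l.
    - eapply Rle_trans; [apply Rmin_r | apply Rmin_l].
    - eapply Rle_trans; [apply Rmin_r | apply Rmin_r]. }
  assert (Hmu : 0 < mu).
  { repeat apply Rmin_pos; simpl; [apply Rdiv_lt_0_compat | apply Rdiv_lt_0_compat |]; lra. }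
  assert (Htot : sum_lt 3 (fun k => steep_slopes eta k * (steep_nodes eta (S k) - steep_nodes eta k)) = 2)
    by (simpl; field; lra).
  set (w := pl (steep_nodes eta) 3 (steep_slopes eta)).
  assert (Hw : inG w) by (eapply pl_G; eauto; reflexivity).
  assert (Hpiece := pl_piece (steep_nodes eta) 3 Hinc (steep_slopes eta)).
  exists w. split; [split|split].
  - exact Hw.
  - change (RInt w (-1) 1 = 0 :> R). rewrite RInt_G_eq_opp_Q_id by auto.
    unfold w.
    rewrite (Q_pl (steep_nodes eta) 3 eq_refl eq_refl Hinc _ _ Hmu Hslope Htot) by apply cont_on_I_id.
    change idI with (fun x : R => x). simpl. rewrite !RInt_id. unfold steep_rise. field. lra.
  - unfold w. rewrite (Hpiece 1%nat (1 / 2)) by (try lia; simpl; lra). simpl. field. lra.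
  - unfold w. rewrite (Hpiece 0%nat (-1 / 2 + eta)), (Hpiece 0%nat (-1 / 2)) by (try lia; simpl; lra). simpl.
    apply Rle_trans with (steep_rise eta * eta / (3 / 2 - eta)); [right; field; lra|].
    apply (Rmult_le_reg_r (3 / 2 - eta)); [lra|]. field_simplify; [nra | lra].
Qed.

Section Spans.
Variable n : nat.
Variable f : nat -> R -> R.
Hypothesis HG : all_G0 n f.

Let V_family_cont k : (k < S n)%nat -> cont_on_I (extend n f idI k).
Proof.
  intros Hk. destruct (Nat.eq_dec k n) as [->|]; [rewrite extend_last; apply cont_on_I_id|].
  rewrite extend_other by auto. apply G_cont, HG; lia.
Qed.

Let V_family_bound k x : (k < S n)%nat -> in_I x -> Rabs (extend n f idI k x) <= 1.
Proof.
  intros Hk Hx. destruct (Nat.eq_dec k n) as [->|]; [rewrite extend_last; apply Rabs_le_1_of_in_I; auto|].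
  rewrite extend_other by auto. apply G_bound; auto. apply HG; lia.
Qed.

Let fe_family_cont k : (k < n)%nat -> cont_on_I (fe (f k)).
Proof. intros; apply cont_on_I_fe, G_cont, HG; auto. Qed.

Let fe_family_bound k x : (k < n)%nat -> in_I x -> Rabs (fe (f k) x) <= 1.
Proof. intros; apply fe_bound; auto. apply HG; auto. Qed.

Lemma not_in_V_near : lin_indep_with idI n f -> forall g, inG g ->
  ~ in_span (S n) (extend n f idI) g -> near_G0 (fun g' => ~ in_span (S n) (extend n f idI) g') g.
Proof.
  intros HL g Hg Hn.
  destruct (not_in_span_near (S n) (extend n f idI) g V_family_bound (G_bound g Hg)
              (proj1 (lin_indep_with_iff _ _ _) HL) Hn) as [e [He H]].
  exists e. split; auto. intros g' _ Hc. apply H. intros t Ht. left. apply Hc, Ht.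
Qed.

Lemma not_in_Ve_near : lin_indep n (fun k => fe (f k)) -> forall g, inG g ->
  ~ in_span n (fun k => fe (f k)) (fe g) -> near_G0 (fun g' => ~ in_span n (fun k => fe (f k)) (fe g')) g.
Proof.
  intros HL g Hg Hn.
  destruct (not_in_span_near n (fun k => fe (f k)) (fe g) fe_family_bound (fun x => fe_bound g x Hg)
              (proj1 (lin_indep_iff _ _) HL) Hn) as [e [He H]].
  exists e. split; auto. intros g' _ Hc. apply H. intros t Ht.
  assert (A := Hc t Ht). assert (B := Hc (- t) (in_I_opp t Ht)). unfold fe.
  replace ((g' t + g' (- t)) / 2 - (g t + g (- t)) / 2) with ((g' t - g t) / 2 + (g' (- t) - g (- t)) / 2)
    by field.
  eapply Rle_trans; [apply Rabs_triang|]. unfold Rdiv. rewrite !Rabs_mult, Rabs_inv, (Rabs_right 2) by lra.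
  lra.
Qed.

Let small_step eta : 0 < eta -> exists e, 0 < e <= 1 / 5 /\ e < eta.
Proof.
  intros He. exists (Rmin (eta / 2) (1 / 5)).
  pose proof (Rmin_l (eta / 2) (1 / 5)). pose proof (Rmin_r (eta / 2) (1 / 5)).
  pose proof (Rmin_pos (eta / 2) (1 / 5) ltac:(lra) ltac:(lra)). repeat split; lra.
Qed.

Lemma exists_not_in_V : lin_indep_with idI n f -> exists w, inG0 w /\ ~ in_span (S n) (extend n f idI) w.
Proof.
  intros HL.
  destruct (not_in_span_of_steep (S n) _ V_family_cont V_family_bound
              (proj1 (lin_indep_with_iff _ _ _) HL) (1 / 2) ltac:(lra)) as [eta [Heta Hsteep]].
  destruct (small_step eta Heta) as (e & He & He').
  destruct (steep_G0 e He) as (w & Hw & Hjump & _).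
  exists w. split; auto.
  apply (Hsteep w (fun t Ht => G_bound w (proj1 Hw) t Ht) (1 / 2 - e) (1 / 2)); unfold in_I; try lra.
  rewrite Rabs_right; lra.
Qed.

(* The jump of w near 1/2 is not compensated near -1/2, so fe w is steep as well. *)
Lemma exists_not_in_Ve : lin_indep n (fun k => fe (f k)) ->
  exists w, inG0 w /\ ~ in_span n (fun k => fe (f k)) (fe w).
Proof.
  intros HL.
  destruct (not_in_span_of_steep n _ fe_family_cont fe_family_bound
              (proj1 (lin_indep_iff _ _) HL) (1 / 8) ltac:(lra)) as [eta [Heta Hsteep]].
  destruct (small_step eta Heta) as (e & He & He').
  destruct (steep_G0 e He) as (w & Hw & Hjump & Hflat).
  exists w. split; auto.
  apply (Hsteep (fe w) (fun t Ht => fe_bound w t (proj1 Hw) Ht) (1 / 2 - e) (1 / 2)); unfold in_I; try lra.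
  - rewrite Rabs_right; lra.
  - unfold fe. replace (- (1 / 2 - e)) with (-1 / 2 + e) by field.
    replace (- (1 / 2)) with (-1 / 2) by field. lra.
Qed.

End Spans.

(** * Generic extensions *)

Lemma indep_extend2_swap n (f : nat -> R -> R) a b :
  indep in_I (S (S n)) (extend (S n) (extend n f a) b) ->
  indep in_I (S (S n)) (extend (S n) (extend n f b) a).
Proof.
  intros H c Hc.
  set (c' := fun k => if Nat.eqb k n then c (S n) else if Nat.eqb k (S n) then c n else c k).
  assert (Hc' : forall k, (k < S (S n))%nat -> c' k = 0).
  { apply H. intros t Ht. specialize (Hc t Ht). rewrite !lc_extend in *.
    assert (E : lc n c' f t = lc n c f t).
    { apply lc_ext; auto. intros k Hk. unfold c'.
      destruct (Nat.eqb_spec k n), (Nat.eqb_spec k (S n)); [lia..|reflexivity]. }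
    rewrite E.
    unfold c'. rewrite Nat.eqb_refl. destruct (Nat.eqb_spec (S n) n); [lia|]. rewrite Nat.eqb_refl. lra. }
  assert (A := Hc' n ltac:(lia)). assert (B := Hc' (S n) ltac:(lia)). unfold c' in A, B.
  rewrite Nat.eqb_refl in A, B. destruct (Nat.eqb_spec (S n) n) in B; [lia|].
  intros k Hk. destruct (Nat.eq_dec k n) as [->|]; auto. destruct (Nat.eq_dec k (S n)) as [->|]; auto.
  specialize (Hc' k Hk). unfold c' in Hc'.
  destruct (Nat.eqb_spec k n), (Nat.eqb_spec k (S n)); [lia..|auto].
Qed.

Lemma all_G0_extend_iff n f g : all_G0 (S n) (extend n f g) <-> all_G0 n f /\ inG0 g.
Proof.
  split.
  - intros H. split; [intros k Hk; rewrite <- (extend_other n f g k) by lia | rewrite <- (extend_last n f g)];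
      apply H; lia.
  - intros [H Hg] k Hk.
    destruct (Nat.eq_dec k n) as [->|]; [rewrite extend_last | rewrite extend_other]; auto.
    apply H; lia.
Qed.

Lemma Q_nonzero_extend_iff n f g : all_G0 n f -> inG g ->
  (Q_nonzero (S n) (extend n f g) <-> Q_nonzero n f /\ forall j, (j < n)%nat -> Q g (f j) <> 0).
Proof.
  intros HG Hg. split.
  - intros H. split.
    + intros i j Hi Hj Hij. rewrite <- (extend_other n f g i), <- (extend_other n f g j) by lia.
      apply H; lia.
    + intros j Hj. rewrite <- (extend_last n f g), <- (extend_other n f g j) by lia. apply H; lia.
  - intros [H Hq] i j Hi Hj Hij.
    destruct (Nat.eq_dec i n) as [->|]; destruct (Nat.eq_dec j n) as [->|]; try lia.
    + rewrite extend_last, extend_other by auto. apply Hq; lia.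
    + rewrite extend_last, extend_other, (Q_swap g (f i)) by (auto; apply HG; lia).
      specialize (Hq i ltac:(lia)). lra.
    + rewrite !extend_other by auto. apply H; lia.
Qed.

Lemma GEN_extend_iff n f g : GEN n f -> inG0 g ->
  (GEN (S n) (extend n f g) <->
   ~ in_span (S n) (extend n f idI) g /\ forall j, (j < n)%nat -> Q g (f j) <> 0).
Proof.
  intros (HG & HL & HQ) Hg. unfold GEN.
  rewrite all_G0_extend_iff, Q_nonzero_extend_iff, lin_indep_with_iff by (auto; apply Hg).
  rewrite <- indep_extend_iff by (apply lin_indep_with_iff; auto).
  assert (Hsw : indep in_I (S (S n)) (extend (S n) (extend n f g) idI) <->
                indep in_I (S (S n)) (extend (S n) (extend n f idI) g))
    by (split; apply indep_extend2_swap).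
  rewrite Hsw. tauto.
Qed.

Lemma GENp_extend_iff n f g : GENp n f -> inG0 g ->
  (GENp (S n) (extend n f g) <->
   ~ in_span n (fun k => fe (f k)) (fe g) /\ forall j, (j < n)%nat -> Q g (f j) <> 0).
Proof.
  intros (HG & HL & HQ) Hg. unfold GENp.
  rewrite all_G0_extend_iff, Q_nonzero_extend_iff, lin_indep_iff by (auto; apply Hg).
  rewrite <- indep_extend_iff by (apply lin_indep_iff; auto).
  replace (fun k => fe (extend n f g k)) with (extend n (fun k => fe (f k)) (fe g))
    by (apply functional_extensionality; intros k; symmetry; apply fe_extend).
  tauto.
Qed.

Lemma Q_sign_near h g : inG h -> inG g -> Q g h <> 0 -> near_G0 (fun g' => 0 < Q g' h * Q g h) g.
Proof.
  intros Hh Hg Hq. pose proof (Rabs_pos_lt _ Hq) as Ha.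
  exists (Rabs (Q g h) / 4). split; [lra|]. intros g' [Hg' _] Hc.
  assert (D : Rabs (Q g' h - Q g h) <= 2 * (Rabs (Q g h) / 4)).
  { apply Q_dist; try apply G_cont; auto. intros t Ht. left. apply Hc, Ht. }
  revert D Ha. split_Rabs; nra.
Qed.

Lemma Q_signs_near n f g : all_G0 n f -> inG g -> (forall j, (j < n)%nat -> Q g (f j) <> 0) ->
  near_G0 (fun g' => forall j, (j < n)%nat -> 0 < Q g' (f j) * Q g (f j)) g.
Proof. intros HG Hg Hq. apply near_G0_forall_lt. intros j Hj. apply Q_sign_near; auto. apply HG; auto. Qed.

Definition nondegenerate n f (P : (R -> R) -> Prop) (g : R -> R) : Prop :=
  inG0 g /\ ~ P g /\ forall j, (j < n)%nat -> Q g (f j) <> 0.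

Lemma nondegenerate_open n f P : all_G0 n f ->
  (forall g, inG g -> ~ P g -> near_G0 (fun g' => ~ P g') g) -> open_in_G0 (nondegenerate n f P).
Proof.
  intros HG HP. split; [intros g Hg; apply Hg|]. intros g (Hg & Hn & Hq).
  destruct (near_G0_and _ _ g (HP g (proj1 Hg) Hn) (Q_signs_near n f g HG (proj1 Hg) Hq)) as [e [He H]].
  exists e. split; auto. intros g' Hg' Hc. destruct (H g' Hg' Hc) as [Hn' Hs].
  split; [|split]; auto. intros j Hj E. specialize (Hs j Hj). rewrite E in Hs. lra.
Qed.

Definition row_signs n f (Rel : nat -> nat -> Prop) (g : R -> R) : Prop :=
  forall j, (j < n)%nat -> (Rel n j -> Q g (f j) < 0) /\ (Rel j n -> 0 < Q g (f j)).

Lemma same_rel_extend_iff n f g Rel : all_G0 n f -> inG g -> tournament (S n) Rel ->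
  restricts_to n Rel f -> (same_rel (Rdig (S n) (extend n f g)) Rel <-> row_signs n f Rel g).
Proof.
  intros HG Hg (Tdom & Tirr & Ttot) HR.
  assert (Hsw : forall j, (j < n)%nat -> Q (f j) g = - Q g (f j))
    by (intros; apply Q_swap; auto; apply HG; auto).
  split.
  - intros H j Hj. split; intros E; apply H in E as (_ & _ & E); unfold Rdig in E.
    + rewrite extend_last, extend_other, Hsw in E by lia. lra.
    + rewrite extend_last, extend_other in E by lia. exact E.
  - intros H i j. unfold Rdig.
    destruct (Nat.eq_dec i n) as [->|]; destruct (Nat.eq_dec j n) as [->|].
    + rewrite extend_last, Q_self by auto. split; [lra | intros E; exfalso; eapply Tirr; eauto].
    + rewrite extend_last, extend_other by auto. split.
      * intros (_ & Hj & E). assert (Hj' : (j < n)%nat) by lia. rewrite Hsw in E by auto.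
        destruct (Ttot n j ltac:(lia) Hj ltac:(lia)) as [[|E'] _]; auto.
        apply H in E'; auto. lra.
      * intros E. destruct (Tdom _ _ E). repeat split; auto. rewrite Hsw by lia. apply H in E; [lra | lia].
    + rewrite extend_last, extend_other by auto. split.
      * intros (Hi & _ & E). assert (Hi' : (i < n)%nat) by lia.
        destruct (Ttot i n Hi ltac:(lia) ltac:(lia)) as [[|E'] _]; auto.
        apply H in E'; auto. lra.
      * intros E. destruct (Tdom _ _ E). repeat split; auto. apply H in E; [lra | lia].
    + rewrite !extend_other by auto. split.
      * intros (Hi & Hj & E). apply HR; try lia. repeat split; lia || auto.
      * intros E. destruct (Tdom _ _ E). apply HR in E as (_ & _ & E); try lia. repeat split; auto.
Qed.

Lemma interval_avoid M (bad : nat -> R -> Prop) l r :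
  (forall k, (k < M)%nat -> forall s1 s2, bad k s1 -> bad k s2 -> s1 = s2) -> l < r ->
  exists s, l < s < r /\ forall k, (k < M)%nat -> ~ bad k s.
Proof.
  intros H Hlr.
  assert (G : forall M', (M' <= M)%nat -> exists l' r', l <= l' < r' /\ r' <= r /\
             forall s, l' < s < r' -> forall k, (k < M')%nat -> ~ bad k s).
  { induction M' as [|M' IH]; intros HM.
    { exists l, r. repeat split; lra || intros; lia. }
    destruct IH as (l' & r' & A & B & C); [lia|].
    destruct (classic (exists b, l' < b < r' /\ bad M' b)) as [[b [Hb Bb]]|NB].
    - exists l', b. repeat split; try lra. intros s Hs k Hk.
      destruct (Nat.eq_dec k M') as [->|]; [|apply C; lra || lia].
      intros Bs. assert (s = b) by (apply (H M'); auto; lia). lra.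
    - exists l', r'. repeat split; try lra. intros s Hs k Hk.
      destruct (Nat.eq_dec k M') as [->|]; [|apply C; lra || lia].
      intros Bs. apply NB. exists s; auto. }
  destruct (G M (le_n M)) as (l' & r' & A & B & C).
  exists ((l' + r') / 2). split; [lra|]. apply C. lra.
Qed.

Definition segment (u w : R -> R) (s : R) : R -> R := fun t => (1 - s) * u t + s * w t.

(* Two distinct points of the segment span both endpoints. *)
Lemma segment_hits_once P u w s1 s2 : lincomb_closed P -> cont_on_I u -> cont_on_I w ->
  ~ P u \/ ~ P w -> P (segment u w s1) -> P (segment u w s2) -> s1 = s2.
Proof.
  intros HP Hu Hw Hn H1 H2. apply NNPP. intros Hne.
  assert (Hc : forall s, cont_on_I (segment u w s)) by (intros; apply cont_on_I_comb; auto).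
  assert (Pu : P u).
  { replace u with (fun t => (- s2 / (s1 - s2)) * segment u w s1 t + (s1 / (s1 - s2)) * segment u w s2 t).
    - apply HP; auto.
    - apply functional_extensionality. intros t. unfold segment. field. lra. }
  assert (Pw : P w).
  { replace w with
      (fun t => ((1 - s2) / (s1 - s2)) * segment u w s1 t + (- (1 - s1) / (s1 - s2)) * segment u w s2 t).
    - apply HP; auto.
    - apply functional_extensionality. intros t. unfold segment. field. lra. }
  tauto.
Qed.

Lemma segment_G0 u w s : inG0 u -> inG0 w -> 0 <= s <= 1 -> inG0 (segment u w s).
Proof. intros Hu Hw Hs. split; [apply G_comb; auto; apply Hu || apply Hw | apply RInt_comb_G0; auto]. Qed.

Lemma segment_close u w s e : inG u -> inG w -> 0 <= s -> 2 * s < e -> sup_close u (segment u w s) e.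
Proof.
  intros Hu Hw Hs He t Ht. unfold segment.
  replace ((1 - s) * u t + s * w t - u t) with (s * (w t - u t)) by ring.
  rewrite Rabs_mult, Rabs_right by lra.
  assert (Rabs (w t - u t) <= 2).
  { pose proof (G_in_I u Hu t Ht). pose proof (G_in_I w Hw t Ht). unfold in_I in *. apply Rabs_le; lra. }
  nra.
Qed.

(* Condition [k < n] is Q(g, f_k) = 0 and condition [n] is [P g]. *)
Definition degenerate_at n f (P : (R -> R) -> Prop) (k : nat) (g : R -> R) : Prop :=
  if Nat.ltb k n then Q g (f k) = 0 else P g.

Lemma degenerate_at_closed n f P k : all_G0 n f -> lincomb_closed P -> lincomb_closed (degenerate_at n f P k).
Proof.
  intros HG HP a b u v Hu Hv. unfold degenerate_at. destruct (Nat.ltb_spec k n); [|apply HP; auto].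
  intros E1 E2. rewrite Q_comb, E1, E2 by (auto; apply HG; auto). ring.
Qed.

Lemma exists_nondegenerate_near n f P u w e : all_G0 n f -> lincomb_closed P -> inG0 u -> inG0 w ->
  ~ P u \/ ~ P w -> (forall j, (j < n)%nat -> Q u (f j) <> 0 \/ Q w (f j) <> 0) -> 0 < e ->
  exists g, nondegenerate n f P g /\ sup_close u g e.
Proof.
  intros HG HP Hu Hw HPuw HQuw He.
  assert (Hcu : cont_on_I u) by (apply G_cont, Hu). assert (Hcw : cont_on_I w) by (apply G_cont, Hw).
  destruct (interval_avoid (S n) (fun k s => degenerate_at n f P k (segment u w s)) 0 (Rmin 1 (e / 4)))
    as [s [Hs Hbad]].
  { intros k Hk s1 s2. apply segment_hits_once; auto using degenerate_at_closed.
    unfold degenerate_at. destruct (Nat.ltb_spec k n); auto. }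
  { apply Rmin_pos; lra. }
  pose proof (Rmin_l 1 (e / 4)). pose proof (Rmin_r 1 (e / 4)).
  exists (segment u w s). split; [split; [|split]|].
  - apply segment_G0; auto; lra.
  - specialize (Hbad n ltac:(lia)). unfold degenerate_at in Hbad.
    destruct (Nat.ltb_spec n n); [lia | auto].
  - intros j Hj. specialize (Hbad j ltac:(lia)). unfold degenerate_at in Hbad.
    destruct (Nat.ltb_spec j n); [auto | lia].
  - apply segment_close; try apply Hu; try apply Hw; lra.
Qed.

Lemma row_signs_transfer n f Rel g g' : (forall j, (j < n)%nat -> 0 < Q g' (f j) * Q g (f j)) ->
  row_signs n f Rel g -> row_signs n f Rel g'.
Proof.
  intros Hs H j Hj. specialize (Hs j Hj). destruct (H j Hj) as [A B].
  split; intros E; [specialize (A E) | specialize (B E)]; nra.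
Qed.

Lemma nondegenerate_rel_open n f Rel P : all_G0 n f -> tournament (S n) Rel -> restricts_to n Rel f ->
  (forall g, inG g -> ~ P g -> near_G0 (fun g' => ~ P g') g) ->
  open_in_G0 (fun g => nondegenerate n f P g /\ same_rel (Rdig (S n) (extend n f g)) Rel).
Proof.
  intros HG HT HR HP. split; [intros g Hg; apply Hg|]. intros g [Hn Hrel].
  destruct (nondegenerate_open n f P HG HP) as [_ Ho].
  pose proof Hn as (Hg & _ & Hq).
  destruct (near_G0_and _ _ g (Ho g Hn) (Q_signs_near n f g HG (proj1 Hg) Hq)) as [e [He H]].
  exists e. split; auto. intros g' Hg' Hc. destruct (H g' Hg' Hc) as [Hn' Hs]. split; auto.
  rewrite same_rel_extend_iff in * by (auto; apply Hg || apply Hg').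
  apply (row_signs_transfer n f Rel g g'); auto.
Qed.

Lemma nondegenerate_rel_nonempty n f Rel P : GEN n f -> tournament (S n) Rel -> restricts_to n Rel f ->
  lincomb_closed P -> (exists w, inG0 w /\ ~ P w) ->
  exists g, nondegenerate n f P g /\ same_rel (Rdig (S n) (extend n f g)) Rel.
Proof.
  intros (HG & HL & _) HT HR HP [w [Hw HPw]].
  set (T := fun j => if excluded_middle_informative (Rel n j) then 1 else -1).
  destruct (Q_realization n f T HG HL) as (g1 & eps & Heps & Hg1 & HQ1).
  assert (HQ1' : forall j, (j < n)%nat -> Q g1 (f j) = - (eps * T j)).
  { intros j Hj. rewrite <- HQ1 by auto. apply Q_swap; [apply HG | apply Hg1]; auto. }
  assert (Hnz : forall j, (j < n)%nat -> Q g1 (f j) <> 0).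
  { intros j Hj. rewrite HQ1' by auto. unfold T. destruct excluded_middle_informative; nra. }
  assert (Hrow : row_signs n f Rel g1).
  { destruct HT as (_ & _ & Ttot). intros j Hj. rewrite HQ1' by auto. unfold T.
    destruct (excluded_middle_informative (Rel n j)) as [E|E]; split; intros E'; try lra; [|tauto].
    exfalso. destruct (Ttot j n ltac:(lia) ltac:(lia) ltac:(lia)) as [_ C]. tauto. }
  destruct (Q_signs_near n f g1 HG (proj1 Hg1) Hnz) as [e [He Hnear]].
  destruct (exists_nondegenerate_near n f P g1 w e HG HP Hg1 Hw (or_intror HPw)
              (fun j Hj => or_introl (Hnz j Hj)) He) as [g [Hg Hc]].
  exists g. split; auto.
  apply same_rel_extend_iff; auto; [apply Hg|].
  apply (row_signs_transfer n f Rel g1 g); auto. apply Hnear; auto. apply Hg.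
Qed.

Lemma nondegenerate_dense n f P : all_G0 n f -> lincomb_closed P -> (exists w, nondegenerate n f P w) ->
  dense_in_G0 (nondegenerate n f P).
Proof.
  intros HG HP [w (Hw & HPw & Hqw)] u Hu e He.
  apply (exists_nondegenerate_near n f P u w e); auto.
Qed.

Lemma pred_ext (S T : (R -> R) -> Prop) : (forall g, S g <-> T g) -> S = T.
Proof. intros H. apply functional_extensionality. intros g. apply propositional_extensionality, H. Qed.

Lemma generic_extension_sets n f Rel (Ext P : (R -> R) -> Prop) :
  GEN n f -> tournament (S n) Rel -> restricts_to n Rel f ->
  lincomb_closed P -> (forall g, inG g -> ~ P g -> near_G0 (fun g' => ~ P g') g) ->
  (exists w, inG0 w /\ ~ P w) ->
  (forall g, inG0 g -> (Ext g <-> ~ P g /\ forall j, (j < n)%nat -> Q g (f j) <> 0)) ->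
  (open_in_G0 (fun g => inG0 g /\ Ext g) /\ dense_in_G0 (fun g => inG0 g /\ Ext g)) /\
  (open_in_G0 (fun g => inG0 g /\ Ext g /\ same_rel (Rdig (S n) (extend n f g)) Rel) /\
   nonempty (fun g => inG0 g /\ Ext g /\ same_rel (Rdig (S n) (extend n f g)) Rel)).
Proof.
  intros HGEN HT HR HP Hnear Hw HExt. pose proof HGEN as (HG & _).
  assert (Hnd : forall g, inG0 g /\ Ext g <-> nondegenerate n f P g).
  { intros g. unfold nondegenerate. split; intros [Hg H]; [rewrite HExt in H | rewrite HExt]; tauto. }
  replace (fun g => inG0 g /\ Ext g) with (nondegenerate n f P) by (symmetry; apply pred_ext, Hnd).
  replace (fun g => inG0 g /\ Ext g /\ same_rel (Rdig (S n) (extend n f g)) Rel)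
    with (fun g => nondegenerate n f P g /\ same_rel (Rdig (S n) (extend n f g)) Rel)
    by (apply pred_ext; intros g; rewrite <- Hnd; tauto).
  destruct (nondegenerate_rel_nonempty n f Rel P HGEN HT HR HP Hw) as [w Hw'].
  split; split.
  - apply nondegenerate_open; auto.
  - apply nondegenerate_dense; auto. exists w. apply Hw'.
  - apply nondegenerate_rel_open; auto.
  - exists w. exact Hw'.
Qed.

Theorem theorem4p11 (n : nat) (f : nat -> R -> R) (Rel : nat -> nat -> Prop) :
  GEN n f ->
  tournament (S n) Rel ->
  restricts_to n Rel f ->
  (* (a) *)
  (open_in_G0 (fun g => inG0 g /\ GEN (S n) (extend n f g)) /\
   dense_in_G0 (fun g => inG0 g /\ GEN (S n) (extend n f g))) /\
  (GENp n f ->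
   open_in_G0 (fun g => inG0 g /\ GENp (S n) (extend n f g)) /\
   dense_in_G0 (fun g => inG0 g /\ GENp (S n) (extend n f g))) /\
  (* (b) *)
  (open_in_G0 (fun g => inG0 g /\ GEN (S n) (extend n f g) /\
                         same_rel (Rdig (S n) (extend n f g)) Rel) /\
   nonempty (fun g => inG0 g /\ GEN (S n) (extend n f g) /\
                         same_rel (Rdig (S n) (extend n f g)) Rel)) /\
  (* (c) *)
  (GENp n f ->
   open_in_G0 (fun g => inG0 g /\ GENp (S n) (extend n f g) /\
                         same_rel (Rdig (S n) (extend n f g)) Rel) /\
   nonempty (fun g => inG0 g /\ GENp (S n) (extend n f g) /\
                         same_rel (Rdig (S n) (extend n f g)) Rel)).
Proof.
  intros HGEN HT HR. pose proof HGEN as (HG & HL & _).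
  destruct (generic_extension_sets n f Rel _ _ HGEN HT HR (in_span_closed _ _)
              (not_in_V_near n f HG HL) (exists_not_in_V n f HG HL)
              (fun g => GEN_extend_iff n f g HGEN)) as [Ha Hb].
  split; [exact Ha|]. split; [|split; [exact Hb|]]; intros Hp; pose proof Hp as (_ & HLe & _);
    destruct (generic_extension_sets n f Rel _ _ HGEN HT HR (fe_in_span_closed _ _)
                (not_in_Ve_near n f HG HLe) (exists_not_in_Ve n f HG HLe)
                (fun g => GENp_extend_iff n f g Hp)); assumption.
Qed.
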